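(* Let $a\in(1,\infty)$ and $\gamma\in\mathbb C^{\mathbb Z}$ bounded with $q_2(\gamma)<\infty$. Then $D_\gamma\in C^2(A_a)$.
   Context: On $\ell^2(\mathbb Z)$: $Te_k=e_{k+1}$, $Xe_k=ke_k$, $D_\gamma e_k=\gamma_ke_k$. $(S\gamma)_k=\gamma_{k+1}$, $(\Delta\gamma)_k=\gamma_k-\gamma_{k+1}$; $q_0(\gamma)=\sup|\gamma_k|$, $q_{n+1}(\gamma)=q_n(\gamma)+\sup_k|k^{n+1}(\Delta^{n+1}\gamma)_k|$. $A_a$ is the self-adjoint closure on $\mathcal D(X)$ of $\frac12\sum_{m\ne0}a^{-|m|}(T^mX+XT^m)$. $B\in C^1(A)$ if $|\langle A\varphi,B\psi\rangle-\langle\varphi,BA\psi\rangle|\le C\|\varphi\|\|\psi\|$ on $\mathcal D(A)$, with $\mathrm{ad}_AB$ the associated bounded operator; $B\in C^2(A)$ if $B\in C^1(A)$ and $\mathrm{ad}_AB\in C^1(A)$. *)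

From Stdlib Require Import Reals ZArith Classical ClassicalEpsilon.
Open Scope R_scope.

Record Cx := mkC { Cre : R; Cim : R }.
Definition C0 : Cx := mkC 0 0.
Definition Cadd (z w : Cx) : Cx := mkC (Cre z + Cre w) (Cim z + Cim w).
Definition Csub (z w : Cx) : Cx := mkC (Cre z - Cre w) (Cim z - Cim w).
Definition Cmul (z w : Cx) : Cx :=
  mkC (Cre z * Cre w - Cim z * Cim w) (Cre z * Cim w + Cim z * Cre w).
Definition Cconj (z : Cx) : Cx := mkC (Cre z) (- Cim z).
Definition Cscal (r : R) (z : Cx) : Cx := mkC (r * Cre z) (r * Cim z).
Definition Cnorm2 (z : Cx) : R := Cre z * Cre z + Cim z * Cim z.
Definition Cabs (z : Cx) : R := sqrt (Cnorm2 z).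

Definition ZSumTo (f : Z -> R) (l : R) : Prop :=
  exists l1 l2,
    infinite_sum (fun n => f (Z.of_nat n)) l1 /\
    infinite_sum (fun n => f (- Z.of_nat (S n))%Z) l2 /\ l = l1 + l2.

(* total version (value 0 if the sum does not exist; only used on convergent sums) *)
Definition Zsum (f : Z -> R) : R :=
  match excluded_middle_informative (exists l, ZSumTo f l) with
  | left H => proj1_sig (constructive_indefinite_description _ H)
  | right _ => 0
  end.

Definition ZsumC (f : Z -> Cx) : Cx :=
  mkC (Zsum (fun k => Cre (f k))) (Zsum (fun k => Cim (f k))).

Definition seqZ := Z -> Cx.
Definition in_l2 (phi : seqZ) : Prop := exists l, ZSumTo (fun k => Cnorm2 (phi k)) l.
Definition l2norm (phi : seqZ) : R := sqrt (Zsum (fun k => Cnorm2 (phi k))).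
Definition inner (phi psi : seqZ) : Cx := ZsumC (fun k => Cmul (Cconj (phi k)) (psi k)).
Definition vadd (phi psi : seqZ) : seqZ := fun k => Cadd (phi k) (psi k).
Definition vsub (phi psi : seqZ) : seqZ := fun k => Csub (phi k) (psi k).
Definition vscal (c : Cx) (phi : seqZ) : seqZ := fun k => Cmul c (phi k).

(* T e_k = e_{k+1}, i.e. (T phi)_k = phi_{k-1}; hence (T^m phi)_k = phi_{k-m}, m in Z *)
Definition Tpow (m : Z) (phi : seqZ) : seqZ := fun k => phi (k - m)%Z.
Definition Xop (phi : seqZ) : seqZ := fun k => Cscal (IZR k) (phi k).
Definition Dop (gamma : Z -> Cx) : seqZ -> seqZ := fun phi k => Cmul (gamma k) (phi k).

Definition domX (phi : seqZ) : Prop := in_l2 phi /\ in_l2 (Xop phi).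

(* A_a on D(X): 1/2 sum_{m<>0} a^{-|m|} (T^m X + X T^m), written componentwise *)
Definition A0 (a : R) (phi : seqZ) : seqZ := fun j =>
  ZsumC (fun m => if Z.eq_dec m 0 then C0 else
           Cscal ((/ a) ^ (Z.abs_nat m) / 2)
                 (Cadd (Tpow m (Xop phi) j) (Xop (Tpow m phi) j))).

(* Graph of the closure A_a of A0 (restricted to D(X)):
   Agraph a phi chi  <->  phi in D(A_a) and A_a phi = chi *)
Definition Agraph (a : R) (phi chi : seqZ) : Prop :=
  in_l2 phi /\ in_l2 chi /\
  exists u : nat -> seqZ,
    (forall n, domX (u n)) /\
    Un_cv (fun n => l2norm (vsub (u n) phi)) 0 /\
    Un_cv (fun n => l2norm (vsub (A0 a (u n)) chi)) 0.

Definition bounded_op (B : seqZ -> seqZ) : Prop :=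
  (forall phi, in_l2 phi -> in_l2 (B phi)) /\
  (forall phi psi c, in_l2 phi -> in_l2 psi ->
      forall k, B (vadd phi (vscal c psi)) k = Cadd (B phi k) (Cmul c (B psi k))) /\
  (exists M, forall phi, in_l2 phi -> l2norm (B phi) <= M * l2norm phi).

Definition C1 (a : R) (B : seqZ -> seqZ) : Prop :=
  bounded_op B /\
  exists C, forall phi chi psi omega,
    Agraph a phi chi -> Agraph a psi omega ->
    Cabs (Csub (inner chi (B psi)) (inner phi (B omega)))
      <= C * l2norm phi * l2norm psi.

(* L is the bounded operator ad_A B associated with the form *)
Definition is_adA (a : R) (B L : seqZ -> seqZ) : Prop :=
  bounded_op L /\
  forall phi chi psi omega,
    Agraph a phi chi -> Agraph a psi omega ->
    inner phi (L psi) = Csub (inner chi (B psi)) (inner phi (B omega)).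

Definition C2 (a : R) (B : seqZ -> seqZ) : Prop :=
  C1 a B /\ exists L, is_adA a B L /\ C1 a L.

(** * Seminorms q_n: q_n(gamma) < oo iff sup_k |k^j (Delta^j gamma)_k| < oo for j <= n *)
Definition Delta (gamma : Z -> Cx) : Z -> Cx := fun k => Csub (gamma k) (gamma (k + 1)%Z).
Definition q_finite (n : nat) (gamma : Z -> Cx) : Prop :=
  forall j, (j <= n)%nat ->
    exists M, forall k, Cabs (Cscal (IZR k ^ j) (Nat.iter j Delta gamma k)) <= M.

(* On the core D(X), A_a is the kernel operator with kernel κ(j,l) = a^{-|j-l|} (j+l) / 2 (zero on the
   diagonal), which is symmetric; hence an identity [A, B] = L proved pointwise on D(X) for bounded B and L
   passes to the graph of the closure by continuity of the inner product.  [A, D_γ] has kernel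
   κ(j,l) (γ_l - γ_j), and q_1(γ) < ∞ gives |j + l| |γ_l - γ_j| <= C |j - l|, so the exponential decay in
   |j - l| makes it Schur bounded.  [A, [A, D_γ]] has kernel Σ_l κ(j,l) κ(l,k) (γ_j + γ_k - 2 γ_l); pairing
   l with j + k - l rewrites it through second differences of γ, which q_2(γ) < ∞ controls, and the
   convolution of two exponentially decaying weights is again Schur bounded. *)

From Pilot Require Import Defs.
From Stdlib Require Import Reals ZArith Lra Lia Psatz ClassicalEpsilon FunctionalExtensionality.
Open Scope R_scope.

Lemma Un_cv_const (c : R) : Un_cv (fun _ => c) c.
Proof. intros eps He; exists 0%nat; intros; unfold Rdist; rewrite Rminus_diag, Rabs_R0; lra. Qed.

Lemma Un_cv_le (u v : nat -> R) (l1 l2 : R) (N0 : nat) :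
  (forall n, (n >= N0)%nat -> u n <= v n) -> Un_cv u l1 -> Un_cv v l2 -> l1 <= l2.
Proof.
  intros H H1 H2.
  destruct (Rle_dec l1 l2) as [|Hn]; auto. exfalso.
  set (e := (l1 - l2) / 2).
  assert (He : e > 0) by (unfold e; lra).
  destruct (H1 e He) as [N1 HN1]. destruct (H2 e He) as [N2 HN2].
  set (n := (N0 + N1 + N2)%nat).
  specialize (HN1 n ltac:(lia)). specialize (HN2 n ltac:(lia)). specialize (H n ltac:(lia)).
  unfold Rdist in *. apply Rabs_def2 in HN1. apply Rabs_def2 in HN2. unfold e in *. lra.
Qed.

Lemma Un_cv_le_const (u : nat -> R) (l B : R) : (forall n, u n <= B) -> Un_cv u l -> l <= B.
Proof. intros. apply (Un_cv_le u (fun _ => B) l B 0); auto using Un_cv_const. Qed.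

Lemma Un_cv_ge_const (u : nat -> R) (l B : R) : (forall n, B <= u n) -> Un_cv u l -> B <= l.
Proof. intros. apply (Un_cv_le (fun _ => B) u B l 0); auto using Un_cv_const. Qed.

Lemma Un_cv_squeeze0 (u v : nat -> R) : (forall n, 0 <= u n <= v n) -> Un_cv v 0 -> Un_cv u 0.
Proof.
  intros H Hv eps He. destruct (Hv eps He) as [N HN]. exists N. intros n Hn.
  specialize (HN n Hn). specialize (H n). unfold Rdist in *. rewrite Rminus_0_r in *.
  rewrite Rabs_right in * by lra. lra.
Qed.

Lemma Un_cv_ext (u v : nat -> R) (l : R) : (forall n, u n = v n) -> Un_cv u l -> Un_cv v l.
Proof. intros H Hu eps He. destruct (Hu eps He) as [N HN]; exists N; intros; rewrite <- H; auto. Qed.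

Lemma Un_cv_scal (u : nat -> R) (l c : R) : Un_cv u l -> Un_cv (fun n => c * u n) (c * l).
Proof. intros. apply CV_mult; auto using Un_cv_const. Qed.

Lemma Un_cv_unshift (u : nat -> R) (l : R) : Un_cv (fun n => u (S n)) l -> Un_cv u l.
Proof.
  intros H eps He. destruct (H eps He) as [N HN]. exists (S N). intros n Hn.
  destruct n. lia. apply HN; lia.
Qed.

Lemma Rabs_le_inv (x b : R) : Rabs x <= b -> - b <= x <= b.
Proof. unfold Rabs; destruct (Rcase_abs x); lra. Qed.

Lemma sum_f_R0_ext (f g : nat -> R) (N : nat) : (forall n, f n = g n) -> sum_f_R0 f N = sum_f_R0 g N.
Proof. intros H. apply sum_eq; auto. Qed.

Lemma sum_f_R0_term_le (f : nat -> R) (N n : nat) :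
  (forall n, 0 <= f n) -> (n <= N)%nat -> f n <= sum_f_R0 f N.
Proof.
  intros Hf Hn. induction N.
  - assert (n = 0%nat) by lia; subst; simpl; lra.
  - destruct (Nat.eq_dec n (S N)) as [->|Hne].
    + simpl. pose proof (cond_pos_sum f N Hf); lra.
    + simpl. specialize (Hf (S N)). pose proof (IHN ltac:(lia)). lra.
Qed.

Lemma sum_f_R0_mono (f : nat -> R) (N M : nat) :
  (forall n, 0 <= f n) -> (N <= M)%nat -> sum_f_R0 f N <= sum_f_R0 f M.
Proof. intros Hf H. induction H. lra. simpl. specialize (Hf (S m)). lra. Qed.

Lemma sum_f_R0_scal (f : nat -> R) (c : R) (N : nat) :
  sum_f_R0 (fun n => c * f n) N = c * sum_f_R0 f N.
Proof. induction N; simpl; try rewrite IHN; ring. Qed.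

Lemma sum_f_R0_exchange (F : nat -> nat -> R) (N M : nat) :
  sum_f_R0 (fun i => sum_f_R0 (fun j => F i j) M) N =
  sum_f_R0 (fun j => sum_f_R0 (fun i => F i j) N) M.
Proof.
  induction N; simpl.
  - apply sum_f_R0_ext; reflexivity.
  - rewrite IHN, <- plus_sum. apply sum_f_R0_ext; reflexivity.
Qed.

Lemma sum_f_R0_cv (u : nat -> nat -> R) (l : nat -> R) (N : nat) :
  (forall i, Un_cv (u i) (l i)) -> Un_cv (fun M => sum_f_R0 (fun i => u i M) N) (sum_f_R0 l N).
Proof. intros H. induction N; simpl. apply H. apply CV_plus; auto. Qed.

(** * Absolutely summable families over Z *)

(* [zpartial h N] is the sum of [h] over the integers in [[-N-1, N]]. *)
Definition zpair (h : Z -> R) (n : nat) : R := h (Z.of_nat n) + h (- Z.of_nat (S n))%Z.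
Definition zpartial (h : Z -> R) (N : nat) : R := sum_f_R0 (zpair h) N.
Definition zsummable (h : Z -> R) : Prop := exists B, forall N, zpartial (fun k => Rabs (h k)) N <= B.

Lemma zpartial_split (h : Z -> R) (N : nat) : zpartial h N =
  sum_f_R0 (fun n => h (Z.of_nat n)) N + sum_f_R0 (fun n => h (- Z.of_nat (S n))%Z) N.
Proof. unfold zpartial, zpair; apply plus_sum. Qed.

Lemma zpartial_S (h : Z -> R) (N : nat) : zpartial h (S N) = zpartial h N + zpair h (S N).
Proof. reflexivity. Qed.

Lemma zpartial_ext (h g : Z -> R) (N : nat) : (forall k, h k = g k) -> zpartial h N = zpartial g N.
Proof. intros H; unfold zpartial, zpair; apply sum_f_R0_ext; intros; rewrite !H; auto. Qed.

Lemma zpartial_plus (h g : Z -> R) (N : nat) :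
  zpartial (fun k => h k + g k) N = zpartial h N + zpartial g N.
Proof. unfold zpartial. rewrite <- plus_sum. apply sum_f_R0_ext; intros; unfold zpair; ring. Qed.

Lemma zpartial_scal (h : Z -> R) (c : R) (N : nat) : zpartial (fun k => c * h k) N = c * zpartial h N.
Proof. unfold zpartial. rewrite <- sum_f_R0_scal. apply sum_f_R0_ext; intros; unfold zpair; ring. Qed.

Lemma zpartial_minus (h g : Z -> R) (N : nat) :
  zpartial (fun k => h k - g k) N = zpartial h N - zpartial g N.
Proof. unfold zpartial. rewrite <- minus_sum. apply sum_f_R0_ext; intros; unfold zpair; ring. Qed.

Lemma zpartial_le (h g : Z -> R) (N : nat) : (forall k, h k <= g k) -> zpartial h N <= zpartial g N.
Proof.
  intros H; unfold zpartial, zpair; apply sum_growing; intros n.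
  pose proof (H (Z.of_nat n)); pose proof (H (- Z.of_nat (S n))%Z); lra.
Qed.

Lemma zpair_nonneg (h : Z -> R) : (forall k, 0 <= h k) -> forall n, 0 <= zpair h n.
Proof. intros H n; unfold zpair; pose proof (H (Z.of_nat n)); pose proof (H (- Z.of_nat (S n))%Z); lra. Qed.

Lemma zpartial_nonneg (h : Z -> R) (N : nat) : (forall k, 0 <= h k) -> 0 <= zpartial h N.
Proof. intros; apply cond_pos_sum, zpair_nonneg; auto. Qed.

Lemma zpartial_mono (h : Z -> R) (N M : nat) :
  (forall k, 0 <= h k) -> (N <= M)%nat -> zpartial h N <= zpartial h M.
Proof. intros; apply sum_f_R0_mono; auto using zpair_nonneg. Qed.

Lemma zpartial_abs (h : Z -> R) (N : nat) : Rabs (zpartial h N) <= zpartial (fun k => Rabs (h k)) N.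
Proof.
  unfold zpartial. eapply Rle_trans. apply Rsum_abs.
  apply sum_growing; intros; unfold zpair. apply Rabs_triang.
Qed.

Lemma zpartial_term (h : Z -> R) (k : Z) : (forall k, 0 <= h k) -> h k <= zpartial h (Z.abs_nat k).
Proof.
  intros H. unfold zpartial. destruct (Z_le_gt_dec 0 k).
  - eapply Rle_trans; [|apply (sum_f_R0_term_le _ _ (Z.abs_nat k)); auto using zpair_nonneg].
    unfold zpair. rewrite Nat2Z.inj_abs_nat, Z.abs_eq by lia.
    pose proof (H (- Z.of_nat (S (Z.abs_nat k)))%Z); lra.
  - eapply Rle_trans; [|apply (sum_f_R0_term_le _ _ (pred (Z.abs_nat k))); auto using zpair_nonneg; lia].
    unfold zpair. replace (- Z.of_nat (S (pred (Z.abs_nat k))))%Z with k by lia.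
    pose proof (H (Z.of_nat (pred (Z.abs_nat k)))); lra.
Qed.

Lemma zpartial_diff (h : Z -> R) (N k : nat) :
  Rabs (zpartial h (N + k) - zpartial h N) <=
  zpartial (fun z => Rabs (h z)) (N + k) - zpartial (fun z => Rabs (h z)) N.
Proof.
  induction k.
  - rewrite Nat.add_0_r. unfold Rminus; rewrite !Rplus_opp_r, Rabs_R0; lra.
  - rewrite Nat.add_succ_r, !zpartial_S.
    replace (zpartial h (N + k) + zpair h (S (N + k)) - zpartial h N)
      with ((zpartial h (N + k) - zpartial h N) + zpair h (S (N + k))) by ring.
    eapply Rle_trans. apply Rabs_triang. unfold zpair at 1 2.
    pose proof (Rabs_triang (h (Z.of_nat (S (N + k)))) (h (- Z.of_nat (S (S (N + k))))%Z)). lra.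
Qed.

Lemma ZSumTo_unique (h : Z -> R) (l1 l2 : R) : ZSumTo h l1 -> ZSumTo h l2 -> l1 = l2.
Proof.
  intros [a1 [b1 [Ha1 [Hb1 ->]]]] [a2 [b2 [Ha2 [Hb2 ->]]]].
  rewrite (uniqueness_sum _ _ _ Ha1 Ha2), (uniqueness_sum _ _ _ Hb1 Hb2). auto.
Qed.

Lemma Zsum_eq (h : Z -> R) (l : R) : ZSumTo h l -> Zsum h = l.
Proof.
  intros H. unfold Zsum. destruct (excluded_middle_informative _) as [H1|H1].
  - destruct (constructive_indefinite_description _ H1) as [l' Hl']; simpl. eapply ZSumTo_unique; eauto.
  - exfalso; apply H1; eauto.
Qed.

Lemma series_abs_cv (f : nat -> R) (B : R) :
  (forall N, sum_f_R0 (fun n => Rabs (f n)) N <= B) -> { l | Un_cv (sum_f_R0 f) l }.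
Proof.
  intros H. apply cv_cauchy_2, cauchy_abs, cv_cauchy_1.
  apply growing_cv. intro n; simpl. pose proof (Rabs_pos (f (S n))); lra.
  exists B. intros x [i ->]. apply H.
Qed.

Lemma zsummable_ZSumTo (h : Z -> R) : zsummable h -> ZSumTo h (Zsum h) /\ Un_cv (zpartial h) (Zsum h).
Proof.
  intros [B HB].
  assert (Hpos : forall N, sum_f_R0 (fun n => Rabs (h (Z.of_nat n))) N <= B).
  { intros N. eapply Rle_trans; [|apply (HB N)]. rewrite zpartial_split.
    pose proof (cond_pos_sum (fun n => Rabs (h (- Z.of_nat (S n))%Z)) N (fun n => Rabs_pos _)). lra. }
  assert (Hneg : forall N, sum_f_R0 (fun n => Rabs (h (- Z.of_nat (S n))%Z)) N <= B).
  { intros N. eapply Rle_trans; [|apply (HB N)]. rewrite zpartial_split.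
    pose proof (cond_pos_sum (fun n => Rabs (h (Z.of_nat n))) N (fun n => Rabs_pos _)). lra. }
  destruct (series_abs_cv _ _ Hpos) as [l1 Hl1].
  destruct (series_abs_cv _ _ Hneg) as [l2 Hl2].
  assert (HZ : ZSumTo h (l1 + l2)) by (exists l1, l2; repeat split; auto).
  rewrite (Zsum_eq _ _ HZ). split; auto.
  eapply Un_cv_ext. intros; symmetry; apply zpartial_split. apply CV_plus; auto.
Qed.

Lemma Zsum_cv (h : Z -> R) : zsummable h -> Un_cv (zpartial h) (Zsum h).
Proof. intros; apply zsummable_ZSumTo; auto. Qed.

Lemma zsummable_dom (h g : Z -> R) : (forall k, Rabs (h k) <= g k) -> zsummable g -> zsummable h.
Proof.
  intros H [B HB]. exists B. intros N. eapply Rle_trans; [|apply (HB N)].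
  eapply Rle_trans. apply zpartial_le. apply H. apply zpartial_le. intros; apply Rle_abs.
Qed.

Lemma zsummable_nonneg_dom (h g : Z -> R) :
  (forall k, 0 <= h k <= g k) -> zsummable g -> zsummable h.
Proof.
  intros H. apply zsummable_dom. intros k; specialize (H k); rewrite Rabs_right; lra.
Qed.

Lemma zsummable_abs (h : Z -> R) : zsummable h -> zsummable (fun k => Rabs (h k)).
Proof.
  intros [B HB]; exists B; intros N. rewrite (zpartial_ext _ (fun k => Rabs (h k))); auto.
  intros; apply Rabs_Rabsolu.
Qed.

Lemma zsummable_ext (h g : Z -> R) : (forall k, h k = g k) -> zsummable h -> zsummable g.
Proof.
  intros H [B HB]; exists B; intros N. rewrite (zpartial_ext _ (fun k => Rabs (h k))); auto.
  intros; rewrite H; auto.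
Qed.

Lemma zsummable_plus (h g : Z -> R) : zsummable h -> zsummable g -> zsummable (fun k => h k + g k).
Proof.
  intros [B1 H1] [B2 H2]. exists (B1 + B2). intros N.
  eapply Rle_trans. apply zpartial_le. intros; apply Rabs_triang.
  rewrite zpartial_plus. specialize (H1 N); specialize (H2 N); lra.
Qed.

Lemma zsummable_scal (h : Z -> R) (c : R) : zsummable h -> zsummable (fun k => c * h k).
Proof.
  intros [B H]. exists (Rabs c * B). intros N.
  rewrite (zpartial_ext _ (fun k => Rabs c * Rabs (h k))) by (intros; apply Rabs_mult).
  rewrite zpartial_scal.
  apply Rmult_le_compat_l. apply Rabs_pos. auto.
Qed.

Lemma zsummable_nonneg_bound (h : Z -> R) (B : R) :
  (forall k, 0 <= h k) -> (forall N, zpartial h N <= B) -> zsummable h.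
Proof.
  intros H0 H. exists B. intros N. erewrite zpartial_ext. apply H.
  intros; rewrite Rabs_right; auto; apply Rle_ge; auto.
Qed.

Lemma Zsum_ext (h g : Z -> R) : (forall k, h k = g k) -> Zsum h = Zsum g.
Proof. intros. f_equal. apply functional_extensionality; auto. Qed.

Lemma Zsum_plus (h g : Z -> R) : zsummable h -> zsummable g ->
  Zsum (fun k => h k + g k) = Zsum h + Zsum g.
Proof.
  intros. eapply UL_sequence. apply Zsum_cv, zsummable_plus; auto.
  eapply Un_cv_ext. intros; symmetry; apply zpartial_plus. apply CV_plus; apply Zsum_cv; auto.
Qed.

Lemma Zsum_scal (h : Z -> R) (c : R) : zsummable h -> Zsum (fun k => c * h k) = c * Zsum h.
Proof.
  intros. eapply UL_sequence. apply Zsum_cv, zsummable_scal; auto.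
  eapply Un_cv_ext. intros; symmetry; apply zpartial_scal. apply Un_cv_scal; apply Zsum_cv; auto.
Qed.

Lemma Zsum_minus (h g : Z -> R) : zsummable h -> zsummable g ->
  Zsum (fun k => h k - g k) = Zsum h - Zsum g.
Proof.
  intros Hh Hg. rewrite (Zsum_ext _ (fun k => h k + (-1) * g k)) by (intros; ring).
  rewrite Zsum_plus, Zsum_scal; auto using zsummable_scal. ring.
Qed.

Lemma Zsum_le (h g : Z -> R) : zsummable h -> zsummable g -> (forall k, h k <= g k) -> Zsum h <= Zsum g.
Proof.
  intros. apply (Un_cv_le (zpartial h) (zpartial g) _ _ 0); auto using Zsum_cv.
  intros; apply zpartial_le; auto.
Qed.

(* No summability is needed: a non-convergent sum is [0] by the convention of [Zsum]. *)
Lemma Zsum_nonneg (h : Z -> R) : (forall k, 0 <= h k) -> 0 <= Zsum h.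
Proof.
  intros H. unfold Zsum. destruct (excluded_middle_informative _) as [H1|H1]; [|lra].
  destruct (constructive_indefinite_description _ H1) as [l [a [b [Ha [Hb ->]]]]]; simpl.
  assert (0 <= a) by (apply (Un_cv_ge_const _ _ 0 (fun n => cond_pos_sum _ n (fun _ => H _)) Ha)).
  assert (0 <= b) by (apply (Un_cv_ge_const _ _ 0 (fun n => cond_pos_sum _ n (fun _ => H _)) Hb)).
  lra.
Qed.

Lemma Zsum_abs (h : Z -> R) : zsummable h -> Rabs (Zsum h) <= Zsum (fun k => Rabs (h k)).
Proof.
  intros Hh. pose proof (zsummable_abs h Hh) as Ha. apply Rabs_le. split.
  - replace (- Zsum (fun k => Rabs (h k))) with (Zsum (fun k => (-1) * Rabs (h k)))
      by (rewrite Zsum_scal; auto; ring).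
    apply Zsum_le; auto using zsummable_scal.
    intros k. pose proof (Rabs_le_inv (h k) (Rabs (h k)) (Rle_refl _)). lra.
  - apply Zsum_le; auto. intros; apply Rle_abs.
Qed.

Lemma Zsum_le_bound (h : Z -> R) (B : R) : zsummable h -> (forall N, zpartial h N <= B) -> Zsum h <= B.
Proof. intros. eapply Un_cv_le_const; eauto. apply Zsum_cv; auto. Qed.

Lemma zpartial_le_Zsum (h : Z -> R) (N : nat) : zsummable h -> (forall k, 0 <= h k) -> zpartial h N <= Zsum h.
Proof.
  intros. apply growing_ineq; [|apply Zsum_cv; auto].
  intro n. rewrite zpartial_S. pose proof (zpair_nonneg h H0 (S n)); lra.
Qed.

Lemma term_le_Zsum (h : Z -> R) (k : Z) : zsummable h -> (forall k, 0 <= h k) -> h k <= Zsum h.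
Proof. intros. eapply Rle_trans. apply zpartial_term; auto. apply zpartial_le_Zsum; auto. Qed.

Lemma Zsum_tail (h : Z -> R) (N : nat) : zsummable h ->
  Rabs (Zsum h - zpartial h N) <= Zsum (fun k => Rabs (h k)) - zpartial (fun k => Rabs (h k)) N.
Proof.
  intros H.
  set (ha := fun k => Rabs (h k)).
  assert (Ch : Un_cv (fun n => zpartial h (n + N) - zpartial h N) (Zsum h - zpartial h N)).
  { apply CV_minus. apply CV_shift'; apply Zsum_cv; auto. apply Un_cv_const. }
  assert (Ca : Un_cv (fun n => zpartial ha (n + N) - zpartial ha N) (Zsum ha - zpartial ha N)).
  { apply CV_minus. apply CV_shift'; apply Zsum_cv, zsummable_abs; auto. apply Un_cv_const. }
  assert (D : forall n, Rabs (zpartial h (n + N) - zpartial h N) <= zpartial ha (n + N) - zpartial ha N).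
  { intros n. rewrite (Nat.add_comm n N). apply zpartial_diff. }
  apply Rabs_le. split.
  - apply (Un_cv_le _ _ _ _ 0 (fun n _ => proj1 (Rabs_le_inv _ _ (D n)))); auto.
    apply (CV_opp _ _ Ca).
  - apply (Un_cv_le _ _ _ _ 0 (fun n _ => proj2 (Rabs_le_inv _ _ (D n)))); auto.
Qed.

Definition Zsum_invariant (f : Z -> Z) : Prop :=
  forall h, zsummable h -> zsummable (fun k => h (f k)) /\ Zsum (fun k => h (f k)) = Zsum h.

Lemma Zsum_invariant_ext (f g : Z -> Z) : (forall k, f k = g k) -> Zsum_invariant f -> Zsum_invariant g.
Proof.
  intros E Hf h Hh. destruct (Hf h Hh) as [S1 E1]. split.
  - refine (zsummable_ext _ _ _ S1); intros; rewrite E; auto.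
  - rewrite <- E1; apply Zsum_ext; intros; rewrite E; auto.
Qed.

Lemma Zsum_invariant_comp (f g : Z -> Z) :
  Zsum_invariant f -> Zsum_invariant g -> Zsum_invariant (fun k => f (g k)).
Proof.
  intros Hf Hg h Hh. destruct (Hf h Hh) as [S1 E1]. destruct (Hg _ S1) as [S2 E2].
  split; auto. rewrite E2; auto.
Qed.

Lemma zpartial_succ (h : Z -> R) (N : nat) :
  zpartial (fun k => h (k + 1)%Z) N = zpartial h N - h (- Z.of_nat (S N))%Z + h (Z.of_nat (S N)).
Proof.
  induction N.
  - unfold zpartial, zpair; simpl. replace (0 + 1)%Z with 1%Z by lia. replace (-1 + 1)%Z with 0%Z by lia.
    replace (Z.pos (Pos.of_succ_nat 0)) with 1%Z by lia. ring.
  - rewrite !zpartial_S, IHN. unfold zpair.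
    replace (Z.of_nat (S N) + 1)%Z with (Z.of_nat (S (S N))) by lia.
    replace (- Z.of_nat (S (S N)) + 1)%Z with (- Z.of_nat (S N))%Z by lia. ring.
Qed.

Lemma zpartial_opp (h : Z -> R) (N : nat) :
  zpartial (fun k => h (- k)%Z) N = zpartial (fun k => h (k + 1)%Z) N.
Proof.
  unfold zpartial, zpair. apply sum_f_R0_ext; intros n.
  replace (- - Z.of_nat (S n))%Z with (Z.of_nat n + 1)%Z by lia.
  replace (- Z.of_nat (S n) + 1)%Z with (- Z.of_nat n)%Z by lia. ring.
Qed.

Lemma zsummable_tails_cv0 (h : Z -> R) : zsummable h ->
  Un_cv (fun N => h (Z.of_nat (S N))) 0 /\ Un_cv (fun N => h (- Z.of_nat (S N))%Z) 0.
Proof.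
  intros H. set (ha := fun k => Rabs (h k)).
  assert (C : Un_cv (zpair ha) 0).
  { apply Un_cv_unshift.
    replace 0 with (Zsum ha - Zsum ha) by ring.
    apply (Un_cv_ext (fun n => zpartial ha (S n) - zpartial ha n)).
    { intros; rewrite zpartial_S; ring. }
    assert (Cv := Zsum_cv _ (zsummable_abs h H)).
    apply CV_minus; auto. apply (Un_cv_ext (fun n => zpartial ha (n + 1))).
    { intros; f_equal; lia. }
    apply CV_shift'; auto. }
  assert (Ha : forall k, 0 <= ha k) by (intros; apply Rabs_pos).
  assert (Sq : forall u, (forall n, Rabs (u n) <= zpair ha n) -> Un_cv u 0).
  { intros u Hu eps He. destruct (C eps He) as [N HN]. exists N; intros n Hn.
    specialize (HN n Hn). specialize (Hu n). unfold Rdist in *. rewrite Rminus_0_r in *.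
    rewrite Rabs_right in HN by (apply Rle_ge, zpair_nonneg; auto). lra. }
  split.
  - apply (Un_cv_ext (fun n => h (Z.of_nat (n + 1)))). { intros; f_equal; lia. }
    apply (CV_shift' (fun n => h (Z.of_nat n)) 1 0). apply Sq.
    intros n; unfold zpair, ha; pose proof (Rabs_pos (h (- Z.of_nat (S n))%Z)); lra.
  - apply Sq. intros n; unfold zpair, ha; pose proof (Rabs_pos (h (Z.of_nat n))); lra.
Qed.

Lemma Zsum_invariant_succ : Zsum_invariant (fun k => (k + 1)%Z).
Proof.
  intros h H. assert (HA : zsummable (fun k => h (k + 1)%Z)).
  { destruct H as [B HB]. exists B. intros N. rewrite (zpartial_succ (fun k => Rabs (h k))).
    eapply Rle_trans; [|apply (HB (S N))]. rewrite zpartial_S. unfold zpair.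
    pose proof (Rabs_pos (h (- Z.of_nat (S N))%Z)). pose proof (Rabs_pos (h (- Z.of_nat (S (S N)))%Z)). lra. }
  split; auto. eapply UL_sequence. apply Zsum_cv; auto.
  eapply Un_cv_ext. intros; symmetry; apply zpartial_succ.
  destruct (zsummable_tails_cv0 h H) as [E1 E2].
  replace (Zsum h) with (Zsum h - 0 + 0) by ring. apply CV_plus; auto. apply CV_minus; auto. apply Zsum_cv; auto.
Qed.

Lemma Zsum_invariant_opp : Zsum_invariant Z.opp.
Proof.
  intros h H. destruct (Zsum_invariant_succ h H) as [HA HZ].
  assert (HA' : zsummable (fun k => h (- k)%Z)).
  { destruct HA as [B HB]; exists B; intros N. rewrite (zpartial_opp (fun k => Rabs (h k))). apply (HB N). }
  split; auto. rewrite <- HZ. eapply UL_sequence. apply Zsum_cv; auto.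
  eapply Un_cv_ext. intros; symmetry; apply zpartial_opp. apply Zsum_cv; auto.
Qed.

Lemma Zsum_invariant_pred : Zsum_invariant (fun k => (k - 1)%Z).
Proof.
  apply (Zsum_invariant_ext (fun k => - (- k + 1))%Z); [intros; lia|].
  apply Zsum_invariant_comp; [apply Zsum_invariant_opp|].
  apply (Zsum_invariant_comp (fun k => k + 1)%Z Z.opp); auto using Zsum_invariant_succ, Zsum_invariant_opp.
Qed.

Lemma Zsum_invariant_iter (f : Z -> Z) (n : nat) :
  Zsum_invariant f -> Zsum_invariant (Nat.iter n f).
Proof.
  intros Hf. induction n; simpl.
  - intros h H; split; auto.
  - apply (Zsum_invariant_comp f); auto.
Qed.

Lemma Zsum_invariant_add (c : Z) : Zsum_invariant (fun k => (k + c)%Z).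
Proof.
  assert (Iter : forall (d : Z) n k, Nat.iter n (fun k => (k + d)%Z) k = (k + Z.of_nat n * d)%Z).
  { intros d n k; induction n; simpl Nat.iter; [lia|]. rewrite IHn; lia. }
  destruct (Z_le_gt_dec 0 c).
  - apply (Zsum_invariant_ext (Nat.iter (Z.to_nat c) (fun k => (k + 1)%Z))).
    { intros k; rewrite Iter; lia. }
    apply Zsum_invariant_iter, Zsum_invariant_succ.
  - apply (Zsum_invariant_ext (Nat.iter (Z.to_nat (- c)) (fun k => (k + -1)%Z))).
    { intros k; rewrite Iter; lia. }
    apply Zsum_invariant_iter.
    apply (Zsum_invariant_ext (fun k => (k - 1)%Z)); [intros; lia|apply Zsum_invariant_pred].
Qed.

Lemma Zsum_invariant_sub (c : Z) : Zsum_invariant (fun k => (k - c)%Z).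
Proof. apply (Zsum_invariant_ext (fun k => (k + - c)%Z)); [intros; lia|apply Zsum_invariant_add]. Qed.

Lemma Zsum_invariant_reflect (c : Z) : Zsum_invariant (fun k => (c - k)%Z).
Proof.
  apply (Zsum_invariant_ext (fun k => (- k + c)%Z)); [intros; lia|].
  apply (Zsum_invariant_comp (fun k => (k + c)%Z) Z.opp); auto using Zsum_invariant_add, Zsum_invariant_opp.
Qed.

(** * Fubini's theorem for double series over Z *)

Lemma zpair_sum_f_R0 (g : Z -> nat -> R) (M n : nat) :
  zpair (fun j => sum_f_R0 (g j) M) n = sum_f_R0 (fun m => zpair (fun j => g j m) n) M.
Proof. unfold zpair. rewrite <- plus_sum. reflexivity. Qed.

Lemma zpartial_exchange (F : Z -> Z -> R) (N : nat) :
  zpartial (fun j => zpartial (fun k => F j k) N) N = zpartial (fun k => zpartial (fun j => F j k) N) N.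
Proof.
  unfold zpartial at 1 3.
  rewrite (sum_f_R0_ext _ (fun n => sum_f_R0 (fun m => zpair (fun j => zpair (F j) m) n) N))
    by (intros n; apply zpair_sum_f_R0).
  rewrite sum_f_R0_exchange. apply sum_f_R0_ext. intros m.
  unfold zpartial. rewrite zpair_sum_f_R0. apply sum_f_R0_ext. intros n. unfold zpair. ring.
Qed.

Lemma zpartial_cv (u : Z -> nat -> R) (l : Z -> R) (N : nat) :
  (forall j, Un_cv (u j) (l j)) -> Un_cv (fun M => zpartial (fun j => u j M) N) (zpartial l N).
Proof.
  intros. unfold zpartial, zpair. apply (sum_f_R0_cv (fun n M => u (Z.of_nat n) M + u (- Z.of_nat (S n))%Z M)).
  intros; apply CV_plus; auto.
Qed.

(* The hypothesis of Fubini's theorem for double series over [Z]. *)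
Definition box_bounded (F : Z -> Z -> R) (B : R) : Prop :=
  forall N, zpartial (fun j => zpartial (fun k => Rabs (F j k)) N) N <= B.

Lemma box_partial_mono (F : Z -> Z -> R) (N M N' M' : nat) : (N <= N')%nat -> (M <= M')%nat ->
  zpartial (fun j => zpartial (fun k => Rabs (F j k)) M) N <= zpartial (fun j => zpartial (fun k => Rabs (F j k)) M') N'.
Proof.
  intros HN HM. eapply Rle_trans.
  - apply zpartial_le. intros j. apply (zpartial_mono (fun k => Rabs (F j k)) M M'); auto.
    intros; apply Rabs_pos.
  - apply zpartial_mono; auto. intros; apply zpartial_nonneg; intros; apply Rabs_pos.
Qed.

Lemma box_bounded_row (F : Z -> Z -> R) (B : R) (j : Z) : box_bounded F B -> zsummable (F j).
Proof.
  intros H. exists B. intros N. set (M := Nat.max N (Z.abs_nat j)).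
  eapply Rle_trans; [| apply (H M)].
  eapply Rle_trans. apply (zpartial_mono (fun k => Rabs (F j k)) N M). intros; apply Rabs_pos. lia.
  eapply Rle_trans. apply (zpartial_term (fun j => zpartial (fun k => Rabs (F j k)) M) j).
  intros; apply zpartial_nonneg; intros; apply Rabs_pos.
  apply box_partial_mono; lia.
Qed.

Lemma box_bounded_transpose (F : Z -> Z -> R) (B : R) : box_bounded F B -> box_bounded (fun k j => F j k) B.
Proof. intros H N. rewrite <- zpartial_exchange. apply H. Qed.

Lemma box_bounded_row_sums (F : Z -> Z -> R) (B : R) (N : nat) : box_bounded F B ->
  zpartial (fun j => Zsum (fun k => Rabs (F j k))) N <= B.
Proof.
  intros H.
  apply (Un_cv_le_const (fun M => zpartial (fun j => zpartial (fun k => Rabs (F j k)) M) N)).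
  - intros M. eapply Rle_trans; [|apply (H (Nat.max N M))]. apply box_partial_mono; lia.
  - apply zpartial_cv. intros j. apply Zsum_cv, zsummable_abs. eapply box_bounded_row; eauto.
Qed.

Lemma box_bounded_row_sums_summable (F : Z -> Z -> R) (B : R) : box_bounded F B ->
  zsummable (fun j => Zsum (F j)) /\ zsummable (fun j => Zsum (fun k => Rabs (F j k))).
Proof.
  intros H.
  assert (HA : zsummable (fun j => Zsum (fun k => Rabs (F j k)))).
  { apply (zsummable_nonneg_bound _ B). intros; apply Zsum_nonneg; intros; apply Rabs_pos.
    intros; apply box_bounded_row_sums; auto. }
  split; auto. eapply zsummable_dom; [|apply HA]. intros j. apply Zsum_abs. eapply box_bounded_row; eauto.
Qed.

Lemma box_bounded_Zsum_le (F : Z -> Z -> R) (B : R) : box_bounded F B -> (forall j k, 0 <= F j k) ->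
  Zsum (fun j => Zsum (F j)) <= B.
Proof.
  intros H Hn. destruct (box_bounded_row_sums_summable F B H) as [A _]. apply Zsum_le_bound; auto.
  intros N. eapply Rle_trans; [|apply (box_bounded_row_sums F B N H)]. right.
  apply zpartial_ext; intros; apply Zsum_ext; intros. rewrite Rabs_right; auto. apply Rle_ge; auto.
Qed.

Lemma box_partial_abs_cv (F : Z -> Z -> R) (B : R) : box_bounded F B ->
  Un_cv (fun N => zpartial (fun j => zpartial (fun k => Rabs (F j k)) N) N) (Zsum (fun j => Zsum (fun k => Rabs (F j k)))).
Proof.
  intros H. destruct (box_bounded_row_sums_summable F B H) as [_ HGa].
  set (T := fun N => zpartial (fun j => zpartial (fun k => Rabs (F j k)) N) N).
  set (P := fun N => zpartial (fun j => Zsum (fun k => Rabs (F j k))) N).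
  assert (Rows : forall j, zsummable (fun k => Rabs (F j k))).
  { intros j; apply zsummable_abs; eapply box_bounded_row; eauto. }
  destruct (growing_cv T) as [Tinf HTinf].
  { intros n. apply box_partial_mono; lia. }
  { exists B. intros x [i ->]. apply H. }
  assert (HP : Un_cv P (Zsum (fun j => Zsum (fun k => Rabs (F j k))))) by (apply Zsum_cv; auto).
  assert (TP : forall N, T N <= P N).
  { intros N. apply zpartial_le. intros j. apply zpartial_le_Zsum; auto. intros; apply Rabs_pos. }
  assert (PT : forall N, P N <= Tinf).
  { intros N. apply (Un_cv_le (fun M => zpartial (fun j => zpartial (fun k => Rabs (F j k)) M) N) T _ _ N).
    - intros M HM. apply box_partial_mono; lia.
    - apply zpartial_cv. intros j. apply Zsum_cv; auto.
    - auto. }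
  replace (Zsum (fun j => Zsum (fun k => Rabs (F j k)))) with Tinf; auto.
  apply Rle_antisym.
  - apply (Un_cv_le T P _ _ 0); auto.
  - apply (Un_cv_le P (fun _ => Tinf) _ _ 0); auto using Un_cv_const.
Qed.

Lemma box_partial_cv (F : Z -> Z -> R) (B : R) : box_bounded F B ->
  Un_cv (fun N => zpartial (fun j => zpartial (fun k => F j k) N) N) (Zsum (fun j => Zsum (F j))).
Proof.
  intros H. destruct (box_bounded_row_sums_summable F B H) as [HG HGa].
  set (T := fun N => zpartial (fun j => zpartial (fun k => Rabs (F j k)) N) N).
  set (P := fun N => zpartial (fun j => Zsum (fun k => Rabs (F j k))) N).
  assert (D : Un_cv (fun N => P N - T N) 0).
  { replace 0 with (Zsum (fun j => Zsum (fun k => Rabs (F j k))) - Zsum (fun j => Zsum (fun k => Rabs (F j k))))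
      by ring.
    apply CV_minus; [apply Zsum_cv; auto|apply (box_partial_abs_cv F B H)]. }
  assert (D2 : Un_cv (fun N => Rabs (zpartial (fun j => Zsum (F j)) N - zpartial (fun j => zpartial (fun k => F j k) N) N)) 0).
  { eapply Un_cv_squeeze0; [|apply D]. intros N. split. apply Rabs_pos.
    rewrite <- zpartial_minus. eapply Rle_trans. apply zpartial_abs. unfold P, T. rewrite <- zpartial_minus.
    apply zpartial_le. intros j. apply Zsum_tail. eapply box_bounded_row; eauto. }
  assert (CG := Zsum_cv _ HG).
  intros eps He. destruct (D2 (eps/2) ltac:(lra)) as [N1 H1]. destruct (CG (eps/2) ltac:(lra)) as [N2 H2].
  exists (N1 + N2)%nat. intros n Hn. specialize (H1 n ltac:(lia)). specialize (H2 n ltac:(lia)).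
  unfold Rdist in *. rewrite Rminus_0_r, Rabs_Rabsolu in H1.
  set (Q := zpartial (fun j => Zsum (F j)) n) in *.
  replace (zpartial (fun j => zpartial (fun k => F j k) n) n - Zsum (fun j => Zsum (F j))) with
    (- (Q - zpartial (fun j => zpartial (fun k => F j k) n) n) + (Q - Zsum (fun j => Zsum (F j)))) by ring.
  eapply Rle_lt_trans. apply Rabs_triang. rewrite Rabs_Ropp. lra.
Qed.

Theorem Fubini (F : Z -> Z -> R) (B : R) : box_bounded F B ->
  Zsum (fun j => Zsum (fun k => F j k)) = Zsum (fun k => Zsum (fun j => F j k)).
Proof.
  intros H. pose proof (box_partial_cv F B H) as Q1.
  pose proof (box_partial_cv _ B (box_bounded_transpose F B H)) as Q2.
  eapply UL_sequence. 2: apply Q2. eapply Un_cv_ext; [|apply Q1]. intros N. apply zpartial_exchange.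
Qed.

Lemma Cx_ext (z w : Cx) : Cre z = Cre w -> Cim z = Cim w -> z = w.
Proof. destruct z, w; simpl; intros; subst; auto. Qed.

Ltac Cring := apply Cx_ext; simpl; ring.

Lemma Cnorm2_nonneg (z : Cx) : 0 <= Cnorm2 z.
Proof. unfold Cnorm2; nra. Qed.

Lemma Cabs_nonneg (z : Cx) : 0 <= Cabs z.
Proof. apply sqrt_pos. Qed.

Lemma Cabs_sqr (z : Cx) : Cabs z * Cabs z = Cnorm2 z.
Proof. apply sqrt_sqrt, Cnorm2_nonneg. Qed.

Lemma Cabs_le_of_sqr (z : Cx) (r : R) : 0 <= r -> Cnorm2 z <= r * r -> Cabs z <= r.
Proof.
  intros Hr H. unfold Cabs. rewrite <- (sqrt_square r) by auto.
  apply sqrt_le_1; auto. apply Cnorm2_nonneg. nra.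
Qed.

Lemma Rabs_le_of_sqr (x c : R) : 0 <= c -> x * x <= c * c -> Rabs x <= c.
Proof. intros. apply Rabs_le. split; nra. Qed.

Lemma Rsqr_abs_eq (x : R) : x * x = Rabs x * Rabs x.
Proof. rewrite <- Rabs_mult. rewrite Rabs_right; nra. Qed.

Lemma Cabs_re (z : Cx) : Rabs (Cre z) <= Cabs z.
Proof. apply Rabs_le_of_sqr. apply Cabs_nonneg. rewrite Cabs_sqr. unfold Cnorm2. nra. Qed.

Lemma Cabs_im (z : Cx) : Rabs (Cim z) <= Cabs z.
Proof. apply Rabs_le_of_sqr. apply Cabs_nonneg. rewrite Cabs_sqr. unfold Cnorm2. nra. Qed.

Lemma Cnorm2_mul (z w : Cx) : Cnorm2 (Cmul z w) = Cnorm2 z * Cnorm2 w.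
Proof. unfold Cnorm2, Cmul; simpl; ring. Qed.

Lemma Cabs_mul (z w : Cx) : Cabs (Cmul z w) = Cabs z * Cabs w.
Proof. unfold Cabs. rewrite Cnorm2_mul, sqrt_mult; auto using Cnorm2_nonneg. Qed.

Lemma Cabs_conj (z : Cx) : Cabs (Cconj z) = Cabs z.
Proof. unfold Cabs, Cnorm2, Cconj; simpl; f_equal; ring. Qed.

Lemma Cabs_scal (r : R) (z : Cx) : Cabs (Cscal r z) = Rabs r * Cabs z.
Proof.
  unfold Cabs. rewrite <- sqrt_Rsqr_abs, <- sqrt_mult by (apply Rle_0_sqr || apply Cnorm2_nonneg).
  f_equal. unfold Cnorm2, Cscal, Rsqr; simpl; ring.
Qed.

Lemma Cabs_C0 : Cabs C0 = 0.
Proof. unfold Cabs, Cnorm2, C0; simpl. replace (0 * 0 + 0 * 0) with 0 by ring. apply sqrt_0. Qed.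

Lemma Cauchy_Schwarz_R2 (x y z w : R) : Rabs (x * z + y * w) <= sqrt (x * x + y * y) * sqrt (z * z + w * w).
Proof.
  rewrite <- sqrt_mult by nra. rewrite <- sqrt_Rsqr_abs. apply sqrt_le_1. apply Rle_0_sqr. nra.
  unfold Rsqr. pose proof (Rle_0_sqr (x * w - y * z)). unfold Rsqr in *. nra.
Qed.

Lemma Cabs_add (z w : Cx) : Cabs (Cadd z w) <= Cabs z + Cabs w.
Proof.
  apply Cabs_le_of_sqr. pose proof (Cabs_nonneg z); pose proof (Cabs_nonneg w); lra.
  replace ((Cabs z + Cabs w) * (Cabs z + Cabs w))
    with (Cabs z * Cabs z + Cabs w * Cabs w + 2 * (Cabs z * Cabs w)) by ring.
  rewrite !Cabs_sqr. pose proof (Rabs_le_inv _ _ (Cauchy_Schwarz_R2 (Cre z) (Cim z) (Cre w) (Cim w))).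
  unfold Cabs, Cnorm2 in *; simpl. nra.
Qed.

Lemma Cabs_sub (z w : Cx) : Cabs (Csub z w) <= Cabs z + Cabs w.
Proof.
  replace (Csub z w) with (Cadd z (Cscal (-1) w)) by Cring.
  rewrite <- (Rmult_1_l (Cabs w)), <- Rabs_R1, <- Rabs_Ropp, <- Cabs_scal. apply Cabs_add.
Qed.

Lemma Cabs_sub_sym (z w : Cx) : Cabs (Csub z w) = Cabs (Csub w z).
Proof. unfold Cabs, Cnorm2, Csub; simpl; f_equal; ring. Qed.

Lemma Cabs_sub_triang (z w u : Cx) : Cabs (Csub z u) <= Cabs (Csub z w) + Cabs (Csub w u).
Proof. replace (Csub z u) with (Cadd (Csub z w) (Csub w u)) by Cring. apply Cabs_add. Qed.

Lemma Cmul_comm (z w : Cx) : Cmul z w = Cmul w z.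
Proof. Cring. Qed.

Definition zsummableC (f : Z -> Cx) : Prop := zsummable (fun k => Cabs (f k)).

Lemma zsummableC_re (f : Z -> Cx) : zsummableC f -> zsummable (fun k => Cre (f k)).
Proof. apply zsummable_dom. intros; apply Cabs_re. Qed.

Lemma zsummableC_im (f : Z -> Cx) : zsummableC f -> zsummable (fun k => Cim (f k)).
Proof. apply zsummable_dom. intros; apply Cabs_im. Qed.

Lemma zsummableC_dom (f : Z -> Cx) (g : Z -> R) : (forall k, Cabs (f k) <= g k) -> zsummable g -> zsummableC f.
Proof. intros H. apply zsummable_nonneg_dom. intros; split; auto using Cabs_nonneg. Qed.

Lemma zsummableC_add (f g : Z -> Cx) : zsummableC f -> zsummableC g -> zsummableC (fun k => Cadd (f k) (g k)).
Proof. intros Hf Hg. eapply zsummableC_dom; [|apply (zsummable_plus _ _ Hf Hg)]. intros; apply Cabs_add. Qed.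

Lemma zsummableC_mul (c : Cx) (f : Z -> Cx) : zsummableC f -> zsummableC (fun k => Cmul c (f k)).
Proof. intros Hf. eapply zsummableC_dom; [|apply (zsummable_scal _ (Cabs c) Hf)]. intros; rewrite Cabs_mul; lra. Qed.

Lemma ZsumC_ext (f g : Z -> Cx) : (forall k, f k = g k) -> ZsumC f = ZsumC g.
Proof. intros. f_equal. apply functional_extensionality; auto. Qed.

Lemma ZsumC_add (f g : Z -> Cx) : zsummableC f -> zsummableC g ->
  ZsumC (fun k => Cadd (f k) (g k)) = Cadd (ZsumC f) (ZsumC g).
Proof. intros. unfold ZsumC, Cadd; simpl. f_equal; apply Zsum_plus; auto using zsummableC_re, zsummableC_im. Qed.

Lemma ZsumC_sub (f g : Z -> Cx) : zsummableC f -> zsummableC g ->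
  ZsumC (fun k => Csub (f k) (g k)) = Csub (ZsumC f) (ZsumC g).
Proof. intros. unfold ZsumC, Csub; simpl. f_equal; apply Zsum_minus; auto using zsummableC_re, zsummableC_im. Qed.

Lemma ZsumC_mul (c : Cx) (f : Z -> Cx) : zsummableC f -> ZsumC (fun k => Cmul c (f k)) = Cmul c (ZsumC f).
Proof.
  intros Hf. pose proof (zsummableC_re f Hf). pose proof (zsummableC_im f Hf).
  unfold ZsumC, Cmul; simpl. f_equal.
  - rewrite <- !Zsum_scal, <- Zsum_minus by auto using zsummable_scal. apply Zsum_ext; intros; ring.
  - rewrite <- !Zsum_scal, <- Zsum_plus by auto using zsummable_scal. apply Zsum_ext; intros; ring.
Qed.

Lemma ZsumC_scal (r : R) (f : Z -> Cx) : zsummableC f -> ZsumC (fun k => Cscal r (f k)) = Cscal r (ZsumC f).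
Proof. intros. unfold ZsumC, Cscal; simpl. f_equal; apply Zsum_scal; auto using zsummableC_re, zsummableC_im. Qed.

Lemma ZsumC_conj (f : Z -> Cx) : zsummableC f -> ZsumC (fun k => Cconj (f k)) = Cconj (ZsumC f).
Proof.
  intros Hf. unfold ZsumC, Cconj; simpl. f_equal.
  rewrite (Zsum_ext _ (fun k => (-1) * Cim (f k))) by (intros; ring).
  rewrite Zsum_scal by (apply zsummableC_im; auto). ring.
Qed.

Lemma ZsumC_abs (f : Z -> Cx) : zsummableC f -> Cabs (ZsumC f) <= Zsum (fun k => Cabs (f k)).
Proof.
  intros H. set (S := ZsumC f).
  pose proof (zsummableC_re f H). pose proof (zsummableC_im f H).
  (* |S|^2 = Re (conj S * S) is the sum of Re (conj S * f k), each bounded by |S| |f k| *)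
  assert (E : Cnorm2 S = Zsum (fun k => Cre S * Cre (f k) + Cim S * Cim (f k))).
  { rewrite Zsum_plus, !Zsum_scal by auto using zsummable_scal. unfold Cnorm2, S, ZsumC; simpl; ring. }
  assert (L : Cabs S * Cabs S <= Cabs S * Zsum (fun k => Cabs (f k))).
  { rewrite Cabs_sqr, E, <- Zsum_scal by auto. apply Zsum_le; auto using zsummable_plus, zsummable_scal.
    intros k. pose proof (Rabs_le_inv _ _ (Cauchy_Schwarz_R2 (Cre S) (Cim S) (Cre (f k)) (Cim (f k)))).
    unfold Cabs, Cnorm2 in *. lra. }
  pose proof (Cabs_nonneg S). pose proof (Zsum_nonneg (fun k => Cabs (f k)) (fun k => Cabs_nonneg _)).
  destruct (Req_dec (Cabs S) 0) as [->|Hn]. lra.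
  apply (Rmult_le_reg_l (Cabs S)); lra.
Qed.

Lemma ZsumC_reflect (c : Z) (f : Z -> Cx) : zsummableC f -> ZsumC (fun l => f (c - l)%Z) = ZsumC f.
Proof.
  intros Hf. unfold ZsumC. f_equal.
  - apply (Zsum_invariant_reflect c (fun l => Cre (f l))). apply zsummableC_re; auto.
  - apply (Zsum_invariant_reflect c (fun l => Cim (f l))). apply zsummableC_im; auto.
Qed.

Definition box_boundedC (F : Z -> Z -> Cx) (B : R) : Prop := box_bounded (fun j k => Cabs (F j k)) B.

Lemma box_bounded_of_C (F : Z -> Z -> Cx) (B : R) (part : Cx -> R) :
  (forall z, Rabs (part z) <= Cabs z) -> box_boundedC F B -> box_bounded (fun j k => part (F j k)) B.
Proof.
  intros Hp H N. eapply Rle_trans; [|apply (H N)].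
  apply zpartial_le; intros; apply zpartial_le; intros.
  rewrite (Rabs_right (Cabs _)) by (apply Rle_ge, Cabs_nonneg). apply Hp.
Qed.

Theorem FubiniC (F : Z -> Z -> Cx) (B : R) : box_boundedC F B ->
  ZsumC (fun j => ZsumC (fun k => F j k)) = ZsumC (fun k => ZsumC (fun j => F j k)).
Proof.
  intros H. unfold ZsumC; simpl. f_equal.
  - apply (Fubini (fun j k => Cre (F j k)) B). apply box_bounded_of_C; auto using Cabs_re.
  - apply (Fubini (fun j k => Cim (F j k)) B). apply box_bounded_of_C; auto using Cabs_im.
Qed.

Lemma box_boundedC_row (F : Z -> Z -> Cx) (B : R) (j : Z) : box_boundedC F B -> zsummableC (F j).
Proof. exact (box_bounded_row _ B j). Qed.

Lemma box_boundedC_col (F : Z -> Z -> Cx) (B : R) (k : Z) : box_boundedC F B -> zsummableC (fun j => F j k).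
Proof. intros H. exact (box_bounded_row _ B k (box_bounded_transpose _ _ H)). Qed.

Lemma box_boundedC_row_sums (F : Z -> Z -> Cx) (B : R) : box_boundedC F B ->
  zsummableC (fun j => ZsumC (F j)) /\ zsummableC (fun k => ZsumC (fun j => F j k)).
Proof.
  assert (Gen : forall F B, box_boundedC F B -> zsummableC (fun j => ZsumC (F j))).
  { intros G C HG. destruct (box_bounded_row_sums_summable _ _ HG) as [_ A].
    eapply zsummableC_dom; [|apply A]. intros j.
    eapply Rle_trans. apply ZsumC_abs. eapply box_boundedC_row; eauto.
    right; apply Zsum_ext; intros; rewrite Rabs_right; auto; apply Rle_ge, Cabs_nonneg. }
  intros H. split; [apply (Gen F B H)|apply (Gen (fun k j => F j k) B), box_bounded_transpose, H].
Qed.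

Lemma quadratic_discriminant (S A B : R) : 0 <= A -> (forall t, 2 * t * S <= t * t * A + B) -> S * S <= A * B.
Proof.
  intros HA H. destruct (Req_dec A 0) as [->|HA'].
  - destruct (Req_dec S 0) as [->|HS]. pose proof (H 0). nra.
    exfalso. pose proof (H ((B + 1) / (2 * S))) as HB.
    replace (2 * ((B + 1) / (2 * S)) * S) with (B + 1) in HB by (field; auto). lra.
  - pose proof (H (S / A)) as HSA. replace (2 * (S / A) * S) with (2 * (S * S) / A) in HSA by (field; auto).
    replace (S / A * (S / A) * A) with ((S * S) / A) in HSA by (field; auto).
    assert (S * S / A <= B) as Hle by lra. apply (Rmult_le_compat_l A) in Hle; [|lra].
    replace (A * (S * S / A)) with (S * S) in Hle by (field; auto). lra.
Qed.

Lemma Zsum_Cauchy_Schwarz (f g h : Z -> R) : (forall k, 0 <= f k) -> (forall k, 0 <= h k) ->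
  (forall k, g k * g k <= f k * h k) -> zsummable f -> zsummable h ->
  zsummable g /\ Zsum g * Zsum g <= Zsum f * Zsum h.
Proof.
  intros Hf Hh Hg Sf Sh.
  assert (Sg : zsummable g).
  { eapply zsummable_dom; [|apply (zsummable_scal _ (/ 2) (zsummable_plus _ _ Sf Sh))]. intros k.
    specialize (Hf k); specialize (Hh k); specialize (Hg k). pose proof (Rle_0_sqr (f k - h k)). unfold Rsqr in *.
    apply Rabs_le_of_sqr; nra. }
  split; auto. apply quadratic_discriminant. apply Zsum_nonneg; auto.
  intros t. rewrite <- (Zsum_scal g (2 * t) Sg), <- (Zsum_scal f (t * t) Sf).
  rewrite <- (Zsum_plus _ _ (zsummable_scal _ (t * t) Sf) Sh).
  apply Zsum_le; auto using zsummable_scal, zsummable_plus.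
  (* each term is a quadratic in [t] with nonpositive discriminant *)
  intros k. specialize (Hf k); specialize (Hh k); specialize (Hg k).
  destruct (Req_dec (f k) 0) as [E|Ef].
  - rewrite E in *. assert (g k = 0) by nra. rewrite H. nra.
  - pose proof (Rle_0_sqr (t * f k - g k)). unfold Rsqr in *.
    assert (f k * (t * t * f k + h k - 2 * t * g k) >= 0) by nra. nra.
Qed.

Definition l2sq (phi : seqZ) : R := Zsum (fun k => Cnorm2 (phi k)).

Lemma in_l2_zsummable (phi : seqZ) : in_l2 phi <-> zsummable (fun k => Cnorm2 (phi k)).
Proof.
  split.
  - intros [l [l1 [l2 [H1 [H2 ->]]]]]. apply (zsummable_nonneg_bound _ (l1 + l2)). intros; apply Cnorm2_nonneg.
    intros N. rewrite zpartial_split.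
    pose proof (sum_incr _ N _ H1 (fun n => Cnorm2_nonneg _)).
    pose proof (sum_incr _ N _ H2 (fun n => Cnorm2_nonneg _)). lra.
  - intros H. exists (Zsum (fun k => Cnorm2 (phi k))). apply zsummable_ZSumTo; auto.
Qed.

Lemma l2norm_nonneg (phi : seqZ) : 0 <= l2norm phi.
Proof. apply sqrt_pos. Qed.

Lemma l2norm_sqr (phi : seqZ) : l2norm phi * l2norm phi = l2sq phi.
Proof. apply sqrt_sqrt, Zsum_nonneg; intros; apply Cnorm2_nonneg. Qed.

Lemma l2norm_le_of_sqr (phi : seqZ) (r : R) : 0 <= r -> l2sq phi <= r * r -> l2norm phi <= r.
Proof.
  intros. unfold l2norm. rewrite <- (sqrt_square r) by auto.
  apply sqrt_le_1; auto. apply Zsum_nonneg; intros; apply Cnorm2_nonneg. nra.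
Qed.

Lemma Cabs_le_l2norm (phi : seqZ) (k : Z) : in_l2 phi -> Cabs (phi k) <= l2norm phi.
Proof.
  intros H. apply Cabs_le_of_sqr. apply l2norm_nonneg. rewrite l2norm_sqr.
  apply (term_le_Zsum (fun k => Cnorm2 (phi k))). apply in_l2_zsummable; auto.
  intros; apply Cnorm2_nonneg.
Qed.

Lemma Cnorm2_Cabs (z : Cx) : Cnorm2 z = Cabs z * Cabs z.
Proof. rewrite Cabs_sqr; auto. Qed.

Lemma in_l2_dom (phi : seqZ) (g : Z -> R) : (forall k, Cnorm2 (phi k) <= g k) -> zsummable g -> in_l2 phi.
Proof.
  intros H Hg. apply in_l2_zsummable. eapply zsummable_nonneg_dom; [|apply Hg].
  intros; split; auto using Cnorm2_nonneg.
Qed.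

Lemma in_l2_add (phi psi : seqZ) : in_l2 phi -> in_l2 psi -> in_l2 (vadd phi psi).
Proof.
  intros H1 H2. apply in_l2_zsummable in H1; apply in_l2_zsummable in H2.
  eapply in_l2_dom; [|apply (zsummable_scal _ 2 (zsummable_plus _ _ H1 H2))].
  intros; unfold Cnorm2, vadd, Cadd; simpl.
  pose proof (Rle_0_sqr (Cre (phi k) - Cre (psi k))); pose proof (Rle_0_sqr (Cim (phi k) - Cim (psi k))).
  unfold Rsqr in *. nra.
Qed.

Lemma in_l2_ext (phi psi : seqZ) : (forall k, phi k = psi k) -> in_l2 phi -> in_l2 psi.
Proof. intros E H. eapply in_l2_dom; [|apply in_l2_zsummable, H]. intros; rewrite <- E; lra. Qed.

Lemma in_l2_sub (phi psi : seqZ) : in_l2 phi -> in_l2 psi -> in_l2 (vsub phi psi).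
Proof.
  intros H1 H2. apply (in_l2_ext (vadd phi (vscal (mkC (-1) 0) psi))).
  { intros; unfold vadd, vsub, vscal; Cring. }
  apply in_l2_add; auto. apply in_l2_zsummable in H2.
  eapply in_l2_dom; [|apply H2]. intros; unfold vscal; rewrite Cnorm2_mul.
  replace (Cnorm2 (mkC (-1) 0)) with 1 by (unfold Cnorm2; simpl; ring). lra.
Qed.

Lemma in_l2_mul (c : Z -> Cx) (phi : seqZ) (M : R) :
  (forall k, Cabs (c k) <= M) -> in_l2 phi -> in_l2 (fun k => Cmul (c k) (phi k)).
Proof.
  intros Hc H. apply in_l2_zsummable in H. eapply in_l2_dom; [|apply (zsummable_scal _ (M * M) H)].
  intros; rewrite Cnorm2_mul, !Cnorm2_Cabs. specialize (Hc k).
  pose proof (Cabs_nonneg (c k)). pose proof (Cabs_nonneg (phi k)).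
  apply Rmult_le_compat_r; nra.
Qed.

Lemma l2_Cauchy_Schwarz (phi psi : seqZ) : in_l2 phi -> in_l2 psi ->
  zsummable (fun k => Cabs (phi k) * Cabs (psi k)) /\
  Zsum (fun k => Cabs (phi k) * Cabs (psi k)) <= l2norm phi * l2norm psi.
Proof.
  intros H1 H2. apply in_l2_zsummable in H1; apply in_l2_zsummable in H2.
  destruct (Zsum_Cauchy_Schwarz (fun k => Cnorm2 (phi k)) (fun k => Cabs (phi k) * Cabs (psi k))
              (fun k => Cnorm2 (psi k)) (fun k => Cnorm2_nonneg _) (fun k => Cnorm2_nonneg _)) as [S CS]; auto.
  { intros k; rewrite !Cnorm2_Cabs; nra. }
  split; auto.
  assert (P : 0 <= Zsum (fun k => Cabs (phi k) * Cabs (psi k)))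
    by (apply Zsum_nonneg; intros; apply Rmult_le_pos; apply Cabs_nonneg).
  assert (Q : forall chi : seqZ, 0 <= Zsum (fun k => Cnorm2 (chi k))) by (intros; apply Zsum_nonneg; intros; apply Cnorm2_nonneg).
  unfold l2norm. rewrite <- sqrt_mult, <- (sqrt_square (Zsum _)) by auto.
  apply sqrt_le_1; auto. nra. apply Rmult_le_pos; auto.
Qed.

Lemma zsummableC_inner (phi psi : seqZ) : in_l2 phi -> in_l2 psi ->
  zsummableC (fun k => Cmul (Cconj (phi k)) (psi k)).
Proof.
  intros H1 H2. destruct (l2_Cauchy_Schwarz phi psi H1 H2) as [H _].
  eapply zsummableC_dom; [|apply H]. intros; rewrite Cabs_mul, Cabs_conj; lra.
Qed.

Lemma inner_Cauchy_Schwarz (phi psi : seqZ) : in_l2 phi -> in_l2 psi ->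
  Cabs (inner phi psi) <= l2norm phi * l2norm psi.
Proof.
  intros H1 H2. unfold inner. eapply Rle_trans. apply ZsumC_abs, zsummableC_inner; auto.
  destruct (l2_Cauchy_Schwarz phi psi H1 H2) as [_ H]. eapply Rle_trans; [|apply H].
  right; apply Zsum_ext; intros; rewrite Cabs_mul, Cabs_conj; auto.
Qed.

Lemma inner_sub_r (phi psi1 psi2 : seqZ) : in_l2 phi -> in_l2 psi1 -> in_l2 psi2 ->
  inner phi (vsub psi1 psi2) = Csub (inner phi psi1) (inner phi psi2).
Proof.
  intros. unfold inner. rewrite <- ZsumC_sub by (apply zsummableC_inner; auto).
  apply ZsumC_ext; intros; unfold vsub; Cring.
Qed.

Lemma inner_sub_l (phi1 phi2 psi : seqZ) : in_l2 phi1 -> in_l2 phi2 -> in_l2 psi ->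
  inner (vsub phi1 phi2) psi = Csub (inner phi1 psi) (inner phi2 psi).
Proof.
  intros. unfold inner. rewrite <- ZsumC_sub by (apply zsummableC_inner; auto).
  apply ZsumC_ext; intros; unfold vsub; Cring.
Qed.

(** * Passing to the closure of A_a *)

Definition l2_cv (u : nat -> seqZ) (phi : seqZ) : Prop :=
  (forall n, in_l2 (u n)) /\ in_l2 phi /\ Un_cv (fun n => l2norm (vsub (u n) phi)) 0.

Definition Cx_cv (z : nat -> Cx) (l : Cx) : Prop := Un_cv (fun n => Cabs (Csub (z n) l)) 0.

Lemma Cabs_sub_le0_eq (z w : Cx) : Cabs (Csub z w) <= 0 -> z = w.
Proof.
  intros H. pose proof (Cabs_nonneg (Csub z w)).
  assert (E : Cnorm2 (Csub z w) = 0) by (rewrite <- Cabs_sqr; nra).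
  unfold Cnorm2, Csub in E; simpl in E.
  pose proof (Rle_0_sqr (Cre z - Cre w)); pose proof (Rle_0_sqr (Cim z - Cim w)); unfold Rsqr in *.
  apply Cx_ext; nra.
Qed.

Lemma Cx_cv_unique (z : nat -> Cx) (l1 l2 : Cx) : Cx_cv z l1 -> Cx_cv z l2 -> l1 = l2.
Proof.
  intros H1 H2. apply Cabs_sub_le0_eq.
  apply (Un_cv_ge_const (fun n => Cabs (Csub (z n) l1) + Cabs (Csub (z n) l2))).
  - intros n. rewrite (Cabs_sub_sym (z n) l1). apply Cabs_sub_triang.
  - replace 0 with (0 + 0) by ring. apply CV_plus; auto.
Qed.

Lemma Cx_cv_sub (z w : nat -> Cx) (l m : Cx) : Cx_cv z l -> Cx_cv w m ->
  Cx_cv (fun n => Csub (z n) (w n)) (Csub l m).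
Proof.
  intros Hz Hw. eapply Un_cv_squeeze0; [|replace 0 with (0 + 0) by ring; apply CV_plus; [apply Hz|apply Hw]].
  intros n; split. apply Cabs_nonneg.
  replace (Csub (Csub (z n) (w n)) (Csub l m)) with (Csub (Csub (z n) l) (Csub (w n) m)) by Cring.
  apply Cabs_sub.
Qed.

Lemma inner_cv (x y : seqZ) (xn yn : nat -> seqZ) : l2_cv xn x -> l2_cv yn y ->
  Cx_cv (fun n => inner (xn n) (yn n)) (inner x y).
Proof.
  intros [Hx1 [Hx2 Hx3]] [Hy1 [Hy2 Hy3]].
  set (dx := fun n => l2norm (vsub (xn n) x)). set (dy := fun n => l2norm (vsub (yn n) y)).
  apply (Un_cv_squeeze0 _ (fun n => dx n * dy n + dx n * l2norm y + l2norm x * dy n)).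
  - intros n. split. apply Cabs_nonneg.
    assert (Sx := in_l2_sub _ _ (Hx1 n) Hx2). assert (Sy := in_l2_sub _ _ (Hy1 n) Hy2).
    replace (Csub (inner (xn n) (yn n)) (inner x y))
      with (Cadd (Cadd (inner (vsub (xn n) x) (vsub (yn n) y)) (inner (vsub (xn n) x) y)) (inner x (vsub (yn n) y))).
    2:{ rewrite !inner_sub_l, !inner_sub_r by auto. Cring. }
    eapply Rle_trans. apply Cabs_add. eapply Rle_trans. apply Rplus_le_compat_r, Cabs_add.
    unfold dx, dy. repeat apply Rplus_le_compat; apply inner_Cauchy_Schwarz; auto.
  - replace 0 with (0 * 0 + 0 * l2norm y + l2norm x * 0) by ring.
    repeat apply CV_plus; repeat apply CV_mult; auto using Un_cv_const.
Qed.

Lemma bounded_op_vsub (B : seqZ -> seqZ) (phi psi : seqZ) : bounded_op B -> in_l2 phi -> in_l2 psi ->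
  B (vsub phi psi) = vsub (B phi) (B psi).
Proof.
  intros [_ [HB _]] H1 H2.
  replace (vsub phi psi) with (vadd phi (vscal (mkC (-1) 0) psi))
    by (apply functional_extensionality; intros; unfold vadd, vsub, vscal; Cring).
  apply functional_extensionality; intros k. rewrite HB by auto. unfold vsub; Cring.
Qed.

Lemma bounded_op_cv (B : seqZ -> seqZ) (u : nat -> seqZ) (phi : seqZ) : bounded_op B -> l2_cv u phi ->
  l2_cv (fun n => B (u n)) (B phi).
Proof.
  intros HB [U1 [U2 U3]]. pose proof HB as [H1 [_ [M H3]]]. split; [|split]; auto.
  eapply Un_cv_squeeze0; [|rewrite <- (Rmult_0_r M); apply (Un_cv_scal _ _ M U3)].
  intros n. split. apply l2norm_nonneg.
  rewrite <- bounded_op_vsub by auto. apply H3. apply in_l2_sub; auto.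
Qed.

(* [L] plays the role of [ad_A B]. *)
Definition commutator_on_core (a : R) (B L : seqZ -> seqZ) : Prop :=
  forall u v, domX u -> domX v -> Csub (inner (A0 a u) (B v)) (inner u (B (A0 a v))) = inner u (L v).

Lemma commutator_closure (a : R) (B L : seqZ -> seqZ) :
  bounded_op B -> bounded_op L -> (forall u, domX u -> in_l2 (A0 a u)) -> commutator_on_core a B L ->
  forall phi chi psi omega, Agraph a phi chi -> Agraph a psi omega ->
    Csub (inner chi (B psi)) (inner phi (B omega)) = inner phi (L psi).
Proof.
  intros HB HL HA Hid phi chi psi omega [P1 [C1 [u [Hu1 [Hu2 Hu3]]]]] [P2 [C2 [v [Hv1 [Hv2 Hv3]]]]].
  assert (CU : l2_cv u phi) by (split; [intros n; apply Hu1|split; auto]).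
  assert (CAU : l2_cv (fun n => A0 a (u n)) chi) by (split; [intros n; apply HA, Hu1|split; auto]).
  assert (CV : l2_cv v psi) by (split; [intros n; apply Hv1|split; auto]).
  assert (CAV : l2_cv (fun n => A0 a (v n)) omega) by (split; [intros n; apply HA, Hv1|split; auto]).
  apply (Cx_cv_unique (fun n => inner (u n) (L (v n)))).
  - apply (Un_cv_ext (fun n => Cabs (Csub (Csub (inner (A0 a (u n)) (B (v n))) (inner (u n) (B (A0 a (v n)))))
                                          (Csub (inner chi (B psi)) (inner phi (B omega)))))).
    { intros n. rewrite Hid; auto. }
    apply Cx_cv_sub; apply inner_cv; auto using bounded_op_cv.
  - apply inner_cv; auto using bounded_op_cv.
Qed.

Lemma is_adA_of_core (a : R) (B L : seqZ -> seqZ) :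
  bounded_op B -> bounded_op L -> (forall u, domX u -> in_l2 (A0 a u)) -> commutator_on_core a B L ->
  is_adA a B L.
Proof.
  intros HB HL HA Hid. split; auto. intros; symmetry; apply (commutator_closure a B L); auto.
Qed.

Lemma C1_of_core (a : R) (B L : seqZ -> seqZ) :
  bounded_op B -> bounded_op L -> (forall u, domX u -> in_l2 (A0 a u)) -> commutator_on_core a B L ->
  Defs.C1 a B.
Proof.
  intros HB HL HA Hid. split; auto. pose proof HL as [L1 [_ [M L3]]].
  exists M. intros phi chi psi omega G1 G2. rewrite (commutator_closure a B L HB HL HA Hid _ _ _ _ G1 G2).
  destruct G1 as [P1 _]; destruct G2 as [P2 _].
  eapply Rle_trans. apply inner_Cauchy_Schwarz; auto.
  replace (M * l2norm phi * l2norm psi) with (l2norm phi * (M * l2norm psi)) by ring.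
  apply Rmult_le_compat_l; auto using l2norm_nonneg.
Qed.

(** * Kernel operators and the Schur test *)

Definition kernel_op (K : Z -> Z -> Cx) (phi : seqZ) : seqZ :=
  fun j => ZsumC (fun l => Cmul (K j l) (phi l)).

Definition schur_bounded (K : Z -> Z -> Cx) (S : R) : Prop :=
  (forall j, zsummable (fun l => Cabs (K j l)) /\ Zsum (fun l => Cabs (K j l)) <= S) /\
  (forall l, zsummable (fun j => Cabs (K j l)) /\ Zsum (fun j => Cabs (K j l)) <= S).

Lemma schur_bounded_entry (K : Z -> Z -> Cx) (S : R) (j l : Z) : schur_bounded K S -> Cabs (K j l) <= S.
Proof.
  intros [H _]. destruct (H j) as [H1 H2]. eapply Rle_trans; [|apply H2].
  apply (term_le_Zsum (fun l => Cabs (K j l))); auto using Cabs_nonneg.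
Qed.

Lemma schur_bounded_nonneg (K : Z -> Z -> Cx) (S : R) : schur_bounded K S -> 0 <= S.
Proof. intros H. pose proof (schur_bounded_entry K S 0 0 H). pose proof (Cabs_nonneg (K 0%Z 0%Z)). lra. Qed.

Lemma kernel_op_row_summable (K : Z -> Z -> Cx) (S : R) (phi : seqZ) (j : Z) :
  schur_bounded K S -> in_l2 phi -> zsummableC (fun l => Cmul (K j l) (phi l)).
Proof.
  intros HK Hphi. apply in_l2_zsummable in Hphi. destruct (proj1 HK j) as [A1 _].
  eapply zsummableC_dom; [|apply (zsummable_plus _ _ (zsummable_scal _ (/2) A1) (zsummable_scal _ (S/2) Hphi))].
  intros l. rewrite Cabs_mul, Cnorm2_Cabs. pose proof (schur_bounded_entry K S j l HK).
  pose proof (Cabs_nonneg (K j l)). pose proof (Cabs_nonneg (phi l)).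
  pose proof (Rle_0_sqr (Cabs (phi l) - 1)). unfold Rsqr in *. nra.
Qed.

Lemma kernel_op_entry_sqr (K : Z -> Z -> Cx) (S : R) (phi : seqZ) (j : Z) : schur_bounded K S -> in_l2 phi ->
  zsummable (fun l => Cabs (K j l) * Cnorm2 (phi l)) /\
  Cnorm2 (kernel_op K phi j) <= S * Zsum (fun l => Cabs (K j l) * Cnorm2 (phi l)).
Proof.
  intros HK Hphi. pose proof (kernel_op_row_summable K S phi j HK Hphi) as Row.
  destruct (proj1 HK j) as [A1 A2].
  assert (G : zsummable (fun l => Cabs (K j l) * Cnorm2 (phi l))).
  { eapply zsummable_nonneg_dom; [|apply (zsummable_scal _ S (proj1 (in_l2_zsummable phi) Hphi))].
    intros l. pose proof (schur_bounded_entry K S j l HK). pose proof (Cabs_nonneg (K j l)).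
    pose proof (Cnorm2_nonneg (phi l)). split; nra. }
  split; auto.
  destruct (Zsum_Cauchy_Schwarz (fun l => Cabs (K j l)) (fun l => Cabs (K j l) * Cabs (phi l))
              (fun l => Cabs (K j l) * Cnorm2 (phi l))) as [_ CS]; auto using Cabs_nonneg.
  { intros l; apply Rmult_le_pos; auto using Cabs_nonneg, Cnorm2_nonneg. }
  { intros l; rewrite Cnorm2_Cabs; nra. }
  assert (T : Cabs (kernel_op K phi j) <= Zsum (fun l => Cabs (K j l) * Cabs (phi l))).
  { unfold kernel_op. eapply Rle_trans. apply ZsumC_abs; auto. right; apply Zsum_ext; intros; apply Cabs_mul. }
  pose proof (Cabs_nonneg (kernel_op K phi j)).
  assert (0 <= Zsum (fun l => Cabs (K j l) * Cnorm2 (phi l)))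
    by (apply Zsum_nonneg; intros l; apply Rmult_le_pos; auto using Cabs_nonneg, Cnorm2_nonneg).
  rewrite Cnorm2_Cabs. eapply Rle_trans; [apply Rmult_le_compat; eauto|].
  eapply Rle_trans; [apply CS|]. apply Rmult_le_compat_r; auto.
Qed.

Lemma schur_box_bounded (K : Z -> Z -> Cx) (S : R) (phi : seqZ) : schur_bounded K S -> in_l2 phi ->
  box_bounded (fun j l => Cabs (K j l) * Cnorm2 (phi l)) (S * l2sq phi).
Proof.
  intros HK Hphi N. pose proof (schur_bounded_nonneg K S HK).
  assert (Fnn : forall j l, 0 <= Cabs (K j l) * Cnorm2 (phi l))
    by (intros; apply Rmult_le_pos; [apply Cabs_nonneg|apply Cnorm2_nonneg]).
  rewrite zpartial_exchange. eapply Rle_trans.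
  - apply (zpartial_le _ (fun l => S * Cnorm2 (phi l))). intros l.
    rewrite (zpartial_ext _ (fun j => Cnorm2 (phi l) * Cabs (K j l)))
      by (intros; rewrite Rabs_right by (apply Rle_ge, Fnn); ring).
    rewrite zpartial_scal, Rmult_comm. apply Rmult_le_compat_r. apply Cnorm2_nonneg.
    destruct (proj2 HK l) as [C1 C2]. eapply Rle_trans; [|apply C2].
    apply zpartial_le_Zsum; auto using Cabs_nonneg.
  - rewrite zpartial_scal. apply Rmult_le_compat_l; auto.
    apply zpartial_le_Zsum; [apply in_l2_zsummable; auto|intros; apply Cnorm2_nonneg].
Qed.

Lemma kernel_op_l2 (K : Z -> Z -> Cx) (S : R) (phi : seqZ) : schur_bounded K S -> in_l2 phi ->
  in_l2 (kernel_op K phi) /\ l2norm (kernel_op K phi) <= S * l2norm phi.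
Proof.
  intros HK Hphi. pose proof (schur_bounded_nonneg K S HK).
  set (F := fun j l => Cabs (K j l) * Cnorm2 (phi l)).
  assert (BB : box_bounded F (S * l2sq phi)) by (apply schur_box_bounded; auto).
  destruct (box_bounded_row_sums_summable F _ BB) as [FA _].
  assert (Pt := fun j => proj2 (kernel_op_entry_sqr K S phi j HK Hphi)).
  assert (HL : in_l2 (kernel_op K phi)) by (eapply in_l2_dom; [apply Pt|apply (zsummable_scal _ S FA)]).
  split; auto. apply l2norm_le_of_sqr. apply Rmult_le_pos; auto using l2norm_nonneg.
  replace (S * l2norm phi * (S * l2norm phi)) with (S * (S * l2sq phi)) by (rewrite <- l2norm_sqr; ring).
  eapply Rle_trans. apply Zsum_le; [apply in_l2_zsummable; auto|apply (zsummable_scal _ S FA)|apply Pt].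
  rewrite Zsum_scal by auto. apply Rmult_le_compat_l; auto.
  apply box_bounded_Zsum_le; auto. intros; unfold F; apply Rmult_le_pos; [apply Cabs_nonneg|apply Cnorm2_nonneg].
Qed.

Lemma kernel_op_bounded (K : Z -> Z -> Cx) (S : R) : schur_bounded K S -> bounded_op (kernel_op K).
Proof.
  intros H. split; [|split].
  - intros; apply (kernel_op_l2 K S); auto.
  - intros phi psi c H1 H2 j. unfold kernel_op, vadd, vscal.
    rewrite <- ZsumC_mul by (eapply kernel_op_row_summable; eauto).
    rewrite <- ZsumC_add by eauto using kernel_op_row_summable, zsummableC_mul.
    apply ZsumC_ext; intros; Cring.
  - exists S. intros; apply (kernel_op_l2 K S); auto.
Qed.

Lemma schur_bounded_toeplitz (K : Z -> Z -> Cx) (W : Z -> R) :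
  (forall j l, Cabs (K j l) <= W (j - l)%Z) -> zsummable W -> schur_bounded K (Zsum W).
Proof.
  intros H HW. assert (Dom : forall j l, 0 <= Cabs (K j l) <= W (j - l)%Z) by (split; auto using Cabs_nonneg).
  split.
  - intros j. destruct (Zsum_invariant_reflect j W HW) as [A E].
    assert (A' : zsummable (fun l => Cabs (K j l))) by (eapply zsummable_nonneg_dom; [|apply A]; auto).
    split; auto. rewrite <- E. apply Zsum_le; auto.
  - intros l. destruct (Zsum_invariant_sub l W HW) as [A E].
    assert (A' : zsummable (fun j => Cabs (K j l))) by (eapply zsummable_nonneg_dom; [|apply A]; auto).
    split; auto. rewrite <- E. apply Zsum_le; auto.
Qed.

Lemma Dop_bounded (gamma : Z -> Cx) (M : R) : (forall k, Cabs (gamma k) <= M) -> bounded_op (Dop gamma).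
Proof.
  intros H. assert (HM : 0 <= M) by (pose proof (H 0%Z); pose proof (Cabs_nonneg (gamma 0%Z)); lra).
  split; [|split].
  - intros; apply (in_l2_mul gamma phi M); auto.
  - intros; unfold Dop, vadd, vscal; Cring.
  - exists M. intros phi Hphi. apply l2norm_le_of_sqr. apply Rmult_le_pos; auto using l2norm_nonneg.
    replace (M * l2norm phi * (M * l2norm phi)) with (M * M * l2sq phi) by (rewrite <- l2norm_sqr; ring).
    apply in_l2_zsummable in Hphi. unfold l2sq. rewrite <- Zsum_scal by auto.
    apply Zsum_le; auto using zsummable_scal. apply in_l2_zsummable, (in_l2_mul gamma phi M); auto.
    apply in_l2_zsummable; auto.
    intros k. unfold Dop. rewrite Cnorm2_mul, !Cnorm2_Cabs. specialize (H k).
    pose proof (Cabs_nonneg (gamma k)). pose proof (Cabs_nonneg (phi k)).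
    apply Rmult_le_compat_r; nra.
Qed.

Lemma poly_geom_series_cv (x : R) (p : nat) : 0 < x < 1 ->
  { l | Un_cv (sum_f_R0 (fun n => INR (S n) ^ p * x ^ n)) l }.
Proof.
  intros Hx. apply (Alembert_C4 _ x); [lra| |].
  - intros n. apply Rmult_lt_0_compat; apply pow_lt; [apply lt_0_INR; lia|lra].
  - apply (Un_cv_ext (fun n => (1 + / (INR n + 1)) ^ p * x)).
    { intros n. assert (Hn : 0 < INR (S n)) by (apply lt_0_INR; lia).
      replace (1 + / (INR n + 1)) with (INR (S (S n)) * / INR (S n))
        by (rewrite !S_INR; field; rewrite S_INR in Hn; lra).
      rewrite Rabs_right.
      - rewrite Rpow_mult_distr, pow_inv. simpl (x ^ S n).
        field. split; apply pow_nonzero; lra.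
      - apply Rle_ge, Rmult_le_pos; [apply Rmult_le_pos|apply Rlt_le, Rinv_0_lt_compat, Rmult_lt_0_compat];
          apply pow_le || apply pow_lt; try apply pos_INR; lra. }
    pose proof (continuity_seq (fun t => (1 + t) ^ p * x) (fun n => RinvN n) 0) as H.
    simpl in H. rewrite Rplus_0_r, pow1, Rmult_1_l in H. apply H; [|apply RinvN_cv].
    apply derivable_continuous_pt. reg.
Qed.

(* [acoef a m] is the coefficient [a^{-|m|}/2] of [T^m] in the series defining [A_a] (zero at [m = 0]). *)
Definition acoef (a : R) (m : Z) : R := if Z.eq_dec m 0 then 0 else (/ a) ^ (Z.abs_nat m) / 2.

Definition weight (a : R) (p : nat) (m : Z) : R := acoef a m * (1 + Rabs (IZR m)) ^ p.

Section Weights.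
Variable a : R.
Hypothesis Ha : 1 < a.

Lemma inv_a_bounds : 0 < / a < 1.
Proof. split. apply Rinv_0_lt_compat; lra. rewrite <- Rinv_1. apply Rinv_lt_contravar; lra. Qed.

Lemma acoef_nonneg (m : Z) : 0 <= acoef a m.
Proof.
  pose proof inv_a_bounds. unfold acoef. destruct (Z.eq_dec m 0); [lra|].
  apply Rmult_le_pos; [apply pow_le|]; lra.
Qed.

Lemma acoef_le_1 (m : Z) : acoef a m <= 1.
Proof.
  pose proof inv_a_bounds. unfold acoef. destruct (Z.eq_dec m 0); [lra|].
  assert ((/ a) ^ Z.abs_nat m <= 1 ^ Z.abs_nat m) by (apply pow_incr; lra). rewrite pow1 in *. lra.
Qed.

Lemma acoef_opp (m : Z) : acoef a (- m) = acoef a m.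
Proof.
  unfold acoef. destruct (Z.eq_dec (- m) 0), (Z.eq_dec m 0); try lia; auto.
  replace (Z.abs_nat (- m)) with (Z.abs_nat m) by lia. auto.
Qed.

Lemma weight_nonneg (p : nat) (m : Z) : 0 <= weight a p m.
Proof.
  unfold weight. apply Rmult_le_pos; [apply acoef_nonneg|apply pow_le]. pose proof (Rabs_pos (IZR m)); lra.
Qed.


Lemma weight_0 (m : Z) : weight a 0 m = acoef a m.
Proof. unfold weight; simpl; ring. Qed.

Lemma weight_le_poly_geom (p : nat) (m : Z) : weight a p m <= INR (S (Z.abs_nat m)) ^ p * (/ a) ^ Z.abs_nat m.
Proof.
  pose proof inv_a_bounds.
  replace (INR (S (Z.abs_nat m))) with (1 + Rabs (IZR m))
    by (rewrite S_INR, Rabs_Zabs, INR_IZR_INZ, Nat2Z.inj_abs_nat; ring).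
  unfold weight, acoef. assert (0 <= (1 + Rabs (IZR m)) ^ p) by (apply pow_le; pose proof (Rabs_pos (IZR m)); lra).
  assert (0 <= (/ a) ^ Z.abs_nat m) by (apply pow_le; lra).
  destruct (Z.eq_dec m 0); nra.
Qed.

Lemma weight_summable (p : nat) : zsummable (weight a p).
Proof.
  pose proof inv_a_bounds as Hx. set (g := fun n => INR (S n) ^ p * (/ a) ^ n).
  assert (Hg : forall n, 0 <= g n) by (intros; unfold g; apply Rmult_le_pos; apply pow_le; [apply pos_INR|lra]).
  destruct (poly_geom_series_cv (/ a) p Hx) as [l Hl].
  apply (zsummable_nonneg_bound _ (2 * l)); [apply weight_nonneg|]. intros N.
  assert (Shift : forall N, sum_f_R0 (fun n => g (S n)) N = sum_f_R0 g (S N) - g 0%nat)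
    by (induction N0; simpl in *; try rewrite IHN0; ring).
  apply Rle_trans with (sum_f_R0 g N + sum_f_R0 (fun n => g (S n)) N).
  - rewrite <- plus_sum. apply sum_growing. intros n. unfold zpair.
    pose proof (weight_le_poly_geom p (Z.of_nat n)). pose proof (weight_le_poly_geom p (- Z.of_nat (S n))).
    rewrite Zabs2Nat.id in *. replace (Z.abs_nat (- Z.of_nat (S n))) with (S n) in * by lia. unfold g; lra.
  - rewrite Shift. pose proof (sum_incr g N l Hl Hg). pose proof (sum_incr g (S N) l Hl Hg).
    pose proof (Hg 0%nat). lra.
Qed.

End Weights.

Lemma acoef_mul_pow_le_weight (a : R) (p : nat) (m : Z) : 1 < a ->
  acoef a m * Rabs (IZR m) ^ p <= weight a p m.
Proof.
  intros Ha. unfold weight. apply Rmult_le_compat_l; [apply acoef_nonneg; auto|].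
  apply pow_incr. pose proof (Rabs_pos (IZR m)); lra.
Qed.

Lemma Cabs_telescope (g : Z -> Cx) (x : Z) (n : nat) (b : R) :
  (forall i, (i < n)%nat -> Cabs (Csub (g (x + Z.of_nat i)%Z) (g (x + Z.of_nat i + 1)%Z)) <= b) ->
  Cabs (Csub (g x) (g (x + Z.of_nat n)%Z)) <= INR n * b.
Proof.
  revert x b. induction n; intros x b H.
  - simpl. replace (x + 0)%Z with x by lia. replace (Csub (g x) (g x)) with C0 by Cring.
    rewrite Cabs_C0; lra.
  - eapply Rle_trans. apply (Cabs_sub_triang _ (g (x + Z.of_nat n)%Z)).
    rewrite S_INR. replace ((INR n + 1) * b) with (INR n * b + b) by ring.
    apply Rplus_le_compat. apply IHn. intros; apply H; lia.
    replace (x + Z.of_nat (S n))%Z with (x + Z.of_nat n + 1)%Z by lia. apply H; lia.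
Qed.

Definition second_diff (g : Z -> Cx) (j p q : Z) : Cx :=
  Cadd (Csub (Csub (g j) (g (j + p)%Z)) (g (j + q)%Z)) (g (j + p + q)%Z).

Lemma second_diff_telescope (g : Z -> Cx) (j : Z) (p q : nat) (b : R) :
  (forall k, (j <= k)%Z -> (k < j + Z.of_nat p + Z.of_nat q)%Z -> Cabs (Defs.Delta (Defs.Delta g) k) <= b) ->
  Cabs (second_diff g j (Z.of_nat p) (Z.of_nat q)) <= INR p * (INR q * b).
Proof.
  intros H.
  assert (Step : forall i, (i < p)%nat ->
    Cabs (Csub (Csub (g (j + Z.of_nat i)%Z) (g (j + Z.of_nat i + Z.of_nat q)%Z))
               (Csub (g (j + Z.of_nat i + 1)%Z) (g (j + Z.of_nat i + 1 + Z.of_nat q)%Z))) <= INR q * b).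
  { intros i Hi.
    replace (Csub (Csub (g (j + Z.of_nat i)%Z) (g (j + Z.of_nat i + Z.of_nat q)%Z))
                  (Csub (g (j + Z.of_nat i + 1)%Z) (g (j + Z.of_nat i + 1 + Z.of_nat q)%Z)))
      with (Csub (Defs.Delta g (j + Z.of_nat i)%Z) (Defs.Delta g (j + Z.of_nat i + Z.of_nat q)%Z)).
    2:{ unfold Defs.Delta. replace (j + Z.of_nat i + Z.of_nat q + 1)%Z with (j + Z.of_nat i + 1 + Z.of_nat q)%Z by lia.
        Cring. }
    apply Cabs_telescope. intros c Hc. apply H; lia. }
  pose proof (Cabs_telescope (fun i => Csub (g i) (g (i + Z.of_nat q)%Z)) j p (INR q * b) Step) as T.
  simpl in T. unfold second_diff.
  replace (Cadd (Csub (Csub (g j) (g (j + Z.of_nat p)%Z)) (g (j + Z.of_nat q)%Z)) (g (j + Z.of_nat p + Z.of_nat q)%Z))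
    with (Csub (Csub (g j) (g (j + Z.of_nat q)%Z)) (Csub (g (j + Z.of_nat p)%Z) (g (j + Z.of_nat p + Z.of_nat q)%Z)))
    by Cring.
  exact T.
Qed.

Section DifferenceBounds.
Variable gamma : Z -> Cx.
Variables M0 M1 M2 : R.
Hypothesis Hg0 : forall k, Cabs (gamma k) <= M0.
Hypothesis Hg1 : forall k, Rabs (IZR k) * Cabs (Defs.Delta gamma k) <= M1.
Hypothesis Hg2 : forall k, IZR k * IZR k * Cabs (Defs.Delta (Defs.Delta gamma) k) <= M2.

Lemma M0_nonneg : 0 <= M0.
Proof. pose proof (Hg0 0%Z); pose proof (Cabs_nonneg (gamma 0%Z)); lra. Qed.

Lemma M1_nonneg : 0 <= M1.
Proof. pose proof (Hg1 0%Z); pose proof (Cabs_nonneg (Defs.Delta gamma 0%Z)); rewrite Rabs_R0 in *; lra. Qed.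

Lemma M2_nonneg : 0 <= M2.
Proof. pose proof (Hg2 0%Z); pose proof (Cabs_nonneg (Defs.Delta (Defs.Delta gamma) 0%Z)); lra. Qed.

Lemma gamma_diff_le (x y : Z) : Cabs (Csub (gamma x) (gamma y)) <= 2 * M0.
Proof. eapply Rle_trans. apply Cabs_sub. pose proof (Hg0 x); pose proof (Hg0 y); lra. Qed.

Lemma second_diff_le (j p q : Z) : Cabs (second_diff gamma j p q) <= 4 * M0.
Proof.
  unfold second_diff. eapply Rle_trans. apply Cabs_add.
  pose proof (Cabs_sub (Csub (gamma j) (gamma (j + p)%Z)) (gamma (j + q)%Z)).
  pose proof (Cabs_sub (gamma j) (gamma (j + p)%Z)).
  pose proof (Hg0 j). pose proof (Hg0 (j + p)%Z). pose proof (Hg0 (j + q)%Z). pose proof (Hg0 (j + p + q)%Z). lra.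
Qed.

(* Far from the origin, [|k| >= |s|/4] on the whole stretch, so [Delta gamma] is [O(1/|s|)] there. *)
Lemma first_diff_bound_nat (x : Z) (n : nat) :
  Rabs (IZR (2 * x + Z.of_nat n)) * Cabs (Csub (gamma x) (gamma (x + Z.of_nat n)%Z)) <= 4 * (M0 + M1) * INR n.
Proof.
  set (s := (2 * x + Z.of_nat n)%Z).
  pose proof M0_nonneg. pose proof M1_nonneg. pose proof (pos_INR n).
  pose proof (Cabs_nonneg (Csub (gamma x) (gamma (x + Z.of_nat n)%Z))).
  destruct (Z_le_gt_dec (Z.abs s) (2 * Z.of_nat n)) as [Hs|Hs].
  - assert (Rabs (IZR s) <= 2 * INR n).
    { rewrite Rabs_Zabs, INR_IZR_INZ, <- mult_IZR. apply IZR_le. lia. }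
    pose proof (gamma_diff_le x (x + Z.of_nat n)%Z). nra.
  - assert (Habs : 0 < Rabs (IZR s)) by (apply Rabs_pos_lt, not_0_IZR; lia).
    assert (B : forall i, (i < n)%nat ->
      Cabs (Csub (gamma (x + Z.of_nat i)%Z) (gamma (x + Z.of_nat i + 1)%Z)) <= 4 * M1 / Rabs (IZR s)).
    { intros i Hi. set (k := (x + Z.of_nat i)%Z).
      assert (Rabs (IZR s) <= 4 * Rabs (IZR k)).
      { rewrite !Rabs_Zabs, <- mult_IZR. apply IZR_le. unfold k, s in *; lia. }
      pose proof (Hg1 k) as H4. unfold Defs.Delta in H4. pose proof (Cabs_nonneg (Csub (gamma k) (gamma (k + 1)%Z))).
      apply (Rmult_le_reg_l (Rabs (IZR s))); auto. unfold Rdiv.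
      replace (Rabs (IZR s) * (4 * M1 * / Rabs (IZR s))) with (4 * M1) by (field; lra). nra. }
    pose proof (Cabs_telescope gamma x n _ B).
    apply Rle_trans with (Rabs (IZR s) * (INR n * (4 * M1 / Rabs (IZR s)))).
    + apply Rmult_le_compat_l; auto. apply Rabs_pos.
    + replace (Rabs (IZR s) * (INR n * (4 * M1 / Rabs (IZR s)))) with (4 * M1 * INR n) by (field; lra). nra.
Qed.

Lemma first_diff_bound (x y : Z) :
  Rabs (IZR x + IZR y) * Cabs (Csub (gamma y) (gamma x)) <= 4 * (M0 + M1) * Rabs (IZR x - IZR y).
Proof.
  rewrite <- plus_IZR, <- minus_IZR.
  destruct (Z_le_gt_dec x y).
  - pose proof (first_diff_bound_nat x (Z.to_nat (y - x))) as H.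
    rewrite INR_IZR_INZ, !Z2Nat.id in H by lia. replace (x + (y - x))%Z with y in H by lia.
    replace (2 * x + (y - x))%Z with (x + y)%Z in H by lia.
    rewrite Cabs_sub_sym.
    replace (Rabs (IZR (x - y))) with (IZR (y - x))
      by (rewrite Rabs_left1 by (apply IZR_le; lia); rewrite <- opp_IZR; f_equal; lia). auto.
  - pose proof (first_diff_bound_nat y (Z.to_nat (x - y))) as H.
    rewrite INR_IZR_INZ, !Z2Nat.id in H by lia. replace (y + (x - y))%Z with x in H by lia.
    replace (2 * y + (x - y))%Z with (x + y)%Z in H by lia.
    rewrite (Rabs_right (IZR (x - y))) by (apply Rle_ge, IZR_le; lia). auto.
Qed.

Lemma second_diff_bound_nat (j : Z) (p q : nat) :
  IZR (2 * j + Z.of_nat p + Z.of_nat q) * IZR (2 * j + Z.of_nat p + Z.of_nat q) *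
    Cabs (second_diff gamma j (Z.of_nat p) (Z.of_nat q)) <=
  16 * (M0 + M2) * ((INR p + INR q) * (INR p + INR q)).
Proof.
  set (s := IZR (2 * j + Z.of_nat p + Z.of_nat q)).
  pose proof M0_nonneg. pose proof M2_nonneg. pose proof (pos_INR p). pose proof (pos_INR q).
  pose proof (Cabs_nonneg (second_diff gamma j (Z.of_nat p) (Z.of_nat q))).
  pose proof (second_diff_le j (Z.of_nat p) (Z.of_nat q)).
  destruct (Z_le_gt_dec (Z.abs (2 * j + Z.of_nat p + Z.of_nat q)) (2 * (Z.of_nat p + Z.of_nat q))) as [Hs|Hs].
  - assert (Rabs s <= 2 * (INR p + INR q)).
    { unfold s. rewrite Rabs_Zabs, !INR_IZR_INZ, <- plus_IZR, <- mult_IZR. apply IZR_le. lia. }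
    assert (s * s <= 4 * ((INR p + INR q) * (INR p + INR q))) by (rewrite Rsqr_abs_eq; pose proof (Rabs_pos s); nra).
    nra.
  - assert (Hs0 : s <> 0) by (apply not_0_IZR; lia).
    assert (Hss : 0 < s * s) by nra.
    assert (B : forall k, (j <= k)%Z -> (k < j + Z.of_nat p + Z.of_nat q)%Z ->
      Cabs (Defs.Delta (Defs.Delta gamma) k) <= 16 * M2 / (s * s)).
    { intros k Hk1 Hk2. assert (Rabs s <= 4 * Rabs (IZR k)).
      { unfold s. rewrite !Rabs_Zabs, <- mult_IZR. apply IZR_le; lia. }
      assert (s * s <= 16 * (IZR k * IZR k)).
      { rewrite (Rsqr_abs_eq s), (Rsqr_abs_eq (IZR k)). pose proof (Rabs_pos s). nra. }
      pose proof (Hg2 k). pose proof (Cabs_nonneg (Defs.Delta (Defs.Delta gamma) k)).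
      apply (Rmult_le_reg_l (s * s)); auto.
      replace (s * s * (16 * M2 / (s * s))) with (16 * M2) by (field; auto). nra. }
    pose proof (second_diff_telescope gamma j p q _ B).
    apply Rle_trans with (s * s * (INR p * (INR q * (16 * M2 / (s * s))))); [apply Rmult_le_compat_l; nra|].
    replace (s * s * (INR p * (INR q * (16 * M2 / (s * s))))) with (16 * M2 * (INR p * INR q)) by (field; auto).
    assert (INR p * INR q <= (INR p + INR q) * (INR p + INR q)) by nra.
    apply Rle_trans with (16 * M2 * ((INR p + INR q) * (INR p + INR q))); [apply Rmult_le_compat_l; lra|].
    apply Rmult_le_compat_r; nra.
Qed.

Lemma second_diff_bound (j p q : Z) :
  IZR (2 * j + p + q) * IZR (2 * j + p + q) * Cabs (second_diff gamma j p q) <=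
  16 * (M0 + M2) * ((Rabs (IZR p) + Rabs (IZR q)) * (Rabs (IZR p) + Rabs (IZR q))).
Proof.
  assert (Pos : forall j p q, (0 <= p)%Z -> (0 <= q)%Z ->
    IZR (2 * j + p + q) * IZR (2 * j + p + q) * Cabs (second_diff gamma j p q) <=
    16 * (M0 + M2) * ((Rabs (IZR p) + Rabs (IZR q)) * (Rabs (IZR p) + Rabs (IZR q)))).
  { intros j' p' q' Hp Hq. pose proof (second_diff_bound_nat j' (Z.to_nat p') (Z.to_nat q')) as H.
    rewrite !INR_IZR_INZ, !Z2Nat.id in H by lia. rewrite !Rabs_right by (apply Rle_ge, IZR_le; lia). auto. }
  (* reduce to [p, q >= 0] by the symmetries of [second_diff] *)
  assert (Swap : forall j p q, second_diff gamma j p q = second_diff gamma j q p).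
  { intros j' p' q'; unfold second_diff. replace (j' + p' + q')%Z with (j' + q' + p')%Z by lia. Cring. }
  assert (Flip : forall j p q, second_diff gamma (j + p) (- p) q = Cscal (-1) (second_diff gamma j p q)).
  { intros j' p' q'; unfold second_diff. replace (j' + p' + - p')%Z with j' by lia.
    replace (j' + p' + - p' + q')%Z with (j' + q')%Z by lia. Cring. }
  assert (AbsFlip : forall j p q, Cabs (second_diff gamma (j + p) (- p) q) = Cabs (second_diff gamma j p q)).
  { intros. rewrite Flip, Cabs_scal. replace (Rabs (-1)) with 1 by (rewrite Rabs_left; lra). ring. }
  assert (Ropp_abs : forall z, Rabs (IZR (- z)) = Rabs (IZR z)) by (intros; rewrite opp_IZR, Rabs_Ropp; auto).
  destruct (Z_le_gt_dec 0 p), (Z_le_gt_dec 0 q).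
  - apply Pos; auto.
  - rewrite Swap, <- AbsFlip. pose proof (Pos (j + q)%Z (- q)%Z p ltac:(lia) ltac:(lia)) as H.
    replace (2 * (j + q) + - q + p)%Z with (2 * j + p + q)%Z in H by lia. rewrite Ropp_abs in H. lra.
  - rewrite <- AbsFlip. pose proof (Pos (j + p)%Z (- p)%Z q ltac:(lia) ltac:(lia)) as H.
    replace (2 * (j + p) + - p + q)%Z with (2 * j + p + q)%Z in H by lia. rewrite Ropp_abs in H. auto.
  - assert (E : second_diff gamma j p q = second_diff gamma (j + p + q) (- p) (- q)).
    { unfold second_diff. replace (j + p + q + - p + - q)%Z with j by lia.
      replace (j + p + q + - p)%Z with (j + q)%Z by lia. replace (j + p + q + - q)%Z with (j + p)%Z by lia.
      Cring. }
    rewrite E. pose proof (Pos (j + p + q)%Z (- p)%Z (- q)%Z ltac:(lia) ltac:(lia)) as H.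
    replace (2 * (j + p + q) + - p + - q)%Z with (2 * j + p + q)%Z in H by lia. rewrite !Ropp_abs in H. auto.
Qed.

End DifferenceBounds.

Lemma box_bounded_dom (F G : Z -> Z -> R) (B : R) :
  (forall j l, Rabs (F j l) <= G j l) -> box_bounded G B -> box_bounded F B.
Proof.
  intros H HG N. eapply Rle_trans; [|apply (HG N)]. apply zpartial_le; intros j; apply zpartial_le; intros l.
  eapply Rle_trans. apply H. apply Rle_abs.
Qed.

Lemma box_bounded_abs_ext (F G : Z -> Z -> R) (B : R) :
  (forall j l, Rabs (F j l) = Rabs (G j l)) -> box_bounded G B -> box_bounded F B.
Proof.
  intros E H N. eapply Rle_trans; [|apply (H N)]. right.
  apply zpartial_ext; intros j; apply zpartial_ext; intros l; apply E.
Qed.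

Lemma box_bounded_scal (F : Z -> Z -> R) (B c : R) : 0 <= c -> box_bounded F B ->
  box_bounded (fun j l => c * F j l) (c * B).
Proof.
  intros Hc H N.
  rewrite (zpartial_ext _ (fun j => c * zpartial (fun l => Rabs (F j l)) N)).
  - rewrite zpartial_scal. apply Rmult_le_compat_l; auto.
  - intros j. rewrite <- zpartial_scal. apply zpartial_ext; intros l. rewrite Rabs_mult, (Rabs_right c) by lra. auto.
Qed.

Lemma box_bounded_plus (F G : Z -> Z -> R) (B1 B2 : R) : box_bounded F B1 -> box_bounded G B2 ->
  box_bounded (fun j l => Rabs (F j l) + Rabs (G j l)) (B1 + B2).
Proof.
  intros H1 H2 N. specialize (H1 N). specialize (H2 N).
  rewrite (zpartial_ext _ (fun j => zpartial (fun l => Rabs (F j l)) N + zpartial (fun l => Rabs (G j l)) N)).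
  - rewrite zpartial_plus. lra.
  - intros j. rewrite <- zpartial_plus. apply zpartial_ext; intros l.
    rewrite Rabs_right; [auto|]. pose proof (Rabs_pos (F j l)); pose proof (Rabs_pos (G j l)); lra.
Qed.

Lemma box_bounded_toeplitz_row (W h : Z -> R) : zsummable W -> (forall m, 0 <= W m) ->
  zsummable h -> (forall j, 0 <= h j) -> box_bounded (fun j l => W (j - l)%Z * h j) (Zsum W * Zsum h).
Proof.
  intros HW Wn Hh hn N.
  rewrite (zpartial_ext _ (fun j => h j * zpartial (fun l => W (j - l)%Z) N)).
  - apply Rle_trans with (zpartial (fun j => Zsum W * h j) N).
    + apply zpartial_le. intros j. rewrite Rmult_comm. apply Rmult_le_compat_r; auto.
      destruct (Zsum_invariant_reflect j W HW) as [A E]. rewrite <- E. apply zpartial_le_Zsum; auto.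
    + rewrite zpartial_scal. apply Rmult_le_compat_l. apply Zsum_nonneg; auto. apply zpartial_le_Zsum; auto.
  - intros j. rewrite <- zpartial_scal. apply zpartial_ext; intros l.
    rewrite Rabs_right by (apply Rle_ge, Rmult_le_pos; auto). ring.
Qed.

(* Young's inequality [W (j - l) g j f l <= W (j - l) (g j^2 + f l^2) / 2] splits the kernel into two Toeplitz pieces. *)
Lemma box_bounded_toeplitz_bilinear (W f g : Z -> R) : zsummable W -> (forall m, 0 <= W m) ->
  (forall k, 0 <= f k) -> (forall k, 0 <= g k) ->
  zsummable (fun k => f k * f k) -> zsummable (fun k => g k * g k) ->
  box_bounded (fun j l => W (j - l)%Z * g j * f l)
    (Zsum W * (Zsum (fun k => g k * g k) + Zsum (fun k => f k * f k)) / 2).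
Proof.
  intros HW Wn fn gn Af Ag.
  destruct (Zsum_invariant_opp W HW) as [HW' EW].
  replace (Zsum W * (Zsum (fun k => g k * g k) + Zsum (fun k => f k * f k)) / 2)
    with (/ 2 * (Zsum W * Zsum (fun k => g k * g k)) + / 2 * (Zsum (fun m => W (- m)%Z) * Zsum (fun k => f k * f k)))
    by (rewrite EW; field).
  assert (Sq : forall k, 0 <= f k * f k /\ 0 <= g k * g k) by (intros k; specialize (fn k); specialize (gn k); nra).
  set (G1 := fun j l => / 2 * (W (j - l)%Z * (g j * g j))).
  set (G2 := fun j l => / 2 * (W (j - l)%Z * (f l * f l))).
  apply (box_bounded_dom _ (fun j l => Rabs (G1 j l) + Rabs (G2 j l))).
  - intros j l. unfold G1, G2.
    pose proof (Wn (j - l)%Z). pose proof (fn l); pose proof (gn j). pose proof (Sq l); pose proof (Sq j).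
    rewrite !Rabs_right by (apply Rle_ge; repeat apply Rmult_le_pos; lra).
    pose proof (Rle_0_sqr (g j - f l)). unfold Rsqr in *. nra.
  - apply box_bounded_plus.
    + apply box_bounded_scal; [lra|]. apply box_bounded_toeplitz_row; auto. apply Sq.
    + apply box_bounded_scal; [lra|].
      apply (box_bounded_dom _ (fun j l => W (- (l - j))%Z * (f l * f l))).
      { intros j l. replace (- (l - j))%Z with (j - l)%Z by lia. pose proof (Wn (j - l)%Z). pose proof (Sq l).
        rewrite Rabs_right; [lra|]. apply Rle_ge, Rmult_le_pos; lra. }
      apply (box_bounded_transpose (fun l j => W (- (l - j))%Z * (f l * f l))).
      apply (box_bounded_toeplitz_row (fun m => W (- m)%Z)); auto. apply Sq.
Qed.

Definition wconv (w : Z -> R) (j k : Z) : R := Zsum (fun l => w (j - l)%Z * w (l - k)%Z).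

Section Convolution.
Variable w : Z -> R.
Hypothesis Hw : zsummable w.
Hypothesis Hwn : forall m, 0 <= w m.


Lemma wconv_box_row (j : Z) : box_bounded (fun k l => w (j - l)%Z * w (l - k)%Z) (Zsum w * Zsum w).
Proof.
  destruct (Zsum_invariant_reflect j w Hw) as [Hr Er].
  apply (box_bounded_abs_ext _ (fun k l => w (l - k)%Z * w (j - l)%Z)); [intros; rewrite Rmult_comm; auto|].
  apply (box_bounded_transpose (fun l k => w (l - k)%Z * w (j - l)%Z)).
  rewrite <- Er at 2. apply box_bounded_toeplitz_row; auto.
Qed.

Lemma wconv_box_col (k : Z) : box_bounded (fun j l => w (j - l)%Z * w (l - k)%Z) (Zsum w * Zsum w).
Proof.
  destruct (Zsum_invariant_opp w Hw) as [Ho Eo]. destruct (Zsum_invariant_sub k w Hw) as [Hs Es].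
  apply (box_bounded_abs_ext _ (fun j l => w (- (l - j))%Z * w (l - k)%Z)).
  { intros j l. replace (- (l - j))%Z with (j - l)%Z by lia. auto. }
  apply (box_bounded_transpose (fun l j => w (- (l - j))%Z * w (l - k)%Z)).
  rewrite <- Eo at 1. rewrite <- Es. apply (box_bounded_toeplitz_row (fun m => w (- m)%Z)); auto.
Qed.

Lemma schur_bounded_of_wconv (K : Z -> Z -> Cx) (c : R) : 0 <= c ->
  (forall j k, Cabs (K j k) <= c * wconv w j k) -> schur_bounded K (c * (Zsum w * Zsum w)).
Proof.
  intros Hc H.
  assert (Nn : forall j k l, 0 <= w (j - l)%Z * w (l - k)%Z) by (intros; apply Rmult_le_pos; auto).
  split.
  - intros j. pose proof (wconv_box_row j) as B.
    destruct (box_bounded_row_sums_summable _ _ B) as [R1 _].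
    assert (A : zsummable (fun k => Cabs (K j k))).
    { eapply zsummable_nonneg_dom; [|apply (zsummable_scal _ c R1)]. intros; split; auto using Cabs_nonneg. }
    split; auto. eapply Rle_trans. apply Zsum_le; auto. apply (zsummable_scal _ c R1). intros; apply H.
    rewrite Zsum_scal by auto. apply Rmult_le_compat_l; auto. apply (box_bounded_Zsum_le _ _ B); auto.
  - intros k. pose proof (wconv_box_col k) as B.
    destruct (box_bounded_row_sums_summable _ _ B) as [R1 _].
    assert (A : zsummable (fun j => Cabs (K j k))).
    { eapply zsummable_nonneg_dom; [|apply (zsummable_scal _ c R1)]. intros; split; auto using Cabs_nonneg. }
    split; auto. eapply Rle_trans. apply Zsum_le; auto. apply (zsummable_scal _ c R1). intros; apply H.
    rewrite Zsum_scal by auto. apply Rmult_le_compat_l; auto. apply (box_bounded_Zsum_le _ _ B); auto.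
Qed.

Lemma box_boundedC_wconv (j : Z) (F : Z -> Z -> Cx) (c : R) : 0 <= c ->
  (forall l k, Cabs (F l k) <= c * (w (j - l)%Z * w (l - k)%Z)) -> box_boundedC F (c * (Zsum w * Zsum w)).
Proof.
  intros Hc H. unfold box_boundedC.
  apply (box_bounded_dom _ (fun l k => c * (w (j - l)%Z * w (l - k)%Z))).
  - intros; rewrite Rabs_right; auto. apply Rle_ge, Cabs_nonneg.
  - apply box_bounded_scal; auto. apply (box_bounded_transpose (fun k l => w (j - l)%Z * w (l - k)%Z)).
    apply wconv_box_row.
Qed.

End Convolution.

(** * A_a as a kernel operator *)

Lemma weight_opp (a : R) (p : nat) (m : Z) : weight a p (- m) = weight a p m.
Proof. unfold weight. rewrite acoef_opp, opp_IZR, Rabs_Ropp. auto. Qed.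

Definition akernel (a : R) (j l : Z) : R := acoef a (j - l) * (IZR j + IZR l).

Lemma Xop_Cabs (u : seqZ) (l : Z) : Cabs (Xop u l) = Rabs (IZR l) * Cabs (u l).
Proof. apply Cabs_scal. Qed.

Section A0Kernel.
Variable a : R.
Hypothesis Ha : 1 < a.

Lemma akernel_sym (j l : Z) : akernel a j l = akernel a l j.
Proof. unfold akernel. replace (l - j)%Z with (- (j - l))%Z by lia. rewrite acoef_opp. ring. Qed.

Lemma akernel_bound (j l : Z) : Rabs (akernel a j l) <= weight a 1 (j - l) * (1 + 2 * Rabs (IZR l)).
Proof.
  unfold akernel, weight. rewrite Rabs_mult, (Rabs_right (acoef a _)) by (apply Rle_ge, acoef_nonneg; auto).
  replace (IZR j + IZR l) with (IZR (j - l) + 2 * IZR l) by (rewrite minus_IZR; ring).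
  pose proof (Rabs_triang (IZR (j - l)) (2 * IZR l)). rewrite Rabs_mult, (Rabs_right 2) in * by lra.
  pose proof (acoef_nonneg a Ha (j - l)). pose proof (Rabs_pos (IZR (j - l))). pose proof (Rabs_pos (IZR l)).
  simpl. rewrite Rmult_1_r, Rmult_assoc. apply Rmult_le_compat_l; nra.
Qed.

Lemma akernel_bound_l (j l : Z) : Rabs (akernel a j l) <= (1 + 2 * Rabs (IZR j)) * weight a 1 (j - l).
Proof.
  rewrite akernel_sym, Rmult_comm. replace (j - l)%Z with (- (l - j))%Z by lia.
  rewrite weight_opp. apply akernel_bound.
Qed.

Lemma A0_entry_bound (u : seqZ) (j l : Z) : domX u ->
  Cabs (Cscal (akernel a j l) (u l)) <= weight a 1 (j - l) * (l2norm u + 2 * l2norm (Xop u)).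
Proof.
  intros [Hu HX]. rewrite Cabs_scal. pose proof (akernel_bound j l).
  pose proof (Cabs_le_l2norm u l Hu). pose proof (Cabs_le_l2norm (Xop u) l HX). rewrite Xop_Cabs in *.
  pose proof (weight_nonneg a Ha 1 (j - l)). pose proof (Cabs_nonneg (u l)). pose proof (Rabs_pos (IZR l)).
  apply Rle_trans with (weight a 1 (j - l) * (1 + 2 * Rabs (IZR l)) * Cabs (u l)).
  - apply Rmult_le_compat_r; auto.
  - rewrite Rmult_assoc. apply Rmult_le_compat_l; auto. lra.
Qed.

Lemma A0_row_summable (u : seqZ) (j : Z) : domX u -> zsummableC (fun l => Cscal (akernel a j l) (u l)).
Proof.
  intros Hu. eapply zsummableC_dom. intros l; apply A0_entry_bound; auto.
  refine (zsummable_ext _ _ _ (zsummable_scal _ (l2norm u + 2 * l2norm (Xop u))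
                                (proj1 (Zsum_invariant_reflect j _ (weight_summable a Ha 1))))).
  intros; simpl; ring.
Qed.

Lemma A0_as_kernel (u : seqZ) (j : Z) : domX u -> A0 a u j = ZsumC (fun l => Cscal (akernel a j l) (u l)).
Proof.
  intros Hu. assert (S := A0_row_summable u j Hu). unfold A0.
  rewrite <- (ZsumC_reflect j _ S). apply ZsumC_ext. intros m. unfold akernel, Tpow, Xop. replace (j - (j - m))%Z with m by lia.
    unfold acoef. destruct (Z.eq_dec m 0); [Cring|]. rewrite minus_IZR. Cring.
Qed.

(* [akernel a j l = 2 acoef (j - l) * l + acoef (j - l) * (j - l)] splits [A0] into two Toeplitz kernels. *)
Definition A0_kernel_X (j l : Z) : Cx := mkC (2 * acoef a (j - l)) 0.
Definition A0_kernel_diff (j l : Z) : Cx := mkC (acoef a (j - l) * IZR (j - l)) 0.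

Lemma Cabs_real (r : R) : Cabs (mkC r 0) = Rabs r.
Proof. unfold Cabs, Cnorm2; simpl. rewrite Rmult_0_l, Rplus_0_r. apply sqrt_Rsqr_abs. Qed.

Lemma schur_bounded_A0_kernel_X : schur_bounded A0_kernel_X (Zsum (fun m => 2 * weight a 0 m)).
Proof.
  apply schur_bounded_toeplitz; [|apply zsummable_scal, weight_summable; auto].
  intros. unfold A0_kernel_X. rewrite Cabs_real, weight_0, Rabs_right; [lra|].
  pose proof (acoef_nonneg a Ha (j - l)); lra.
Qed.

Lemma schur_bounded_A0_kernel_diff : schur_bounded A0_kernel_diff (Zsum (weight a 1)).
Proof.
  apply schur_bounded_toeplitz; [|apply weight_summable; auto].
  intros. unfold A0_kernel_diff. rewrite Cabs_real, Rabs_mult, (Rabs_right (acoef a _)) by (apply Rle_ge, acoef_nonneg; auto).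
  pose proof (acoef_mul_pow_le_weight a 1 (j - l) Ha). simpl in *. lra.
Qed.

Lemma A0_decomp (u : seqZ) (j : Z) : domX u ->
  A0 a u j = Cadd (kernel_op A0_kernel_X (Xop u) j) (kernel_op A0_kernel_diff u j).
Proof.
  intros Hu. rewrite A0_as_kernel by auto. unfold kernel_op.
  rewrite <- ZsumC_add.
  - apply ZsumC_ext; intros l. unfold A0_kernel_X, A0_kernel_diff, akernel, Xop. rewrite minus_IZR. Cring.
  - eapply kernel_op_row_summable. apply schur_bounded_A0_kernel_X. apply Hu.
  - eapply kernel_op_row_summable. apply schur_bounded_A0_kernel_diff. apply Hu.
Qed.

Lemma A0_l2 (u : seqZ) : domX u -> in_l2 (A0 a u).
Proof.
  intros Hu. eapply in_l2_ext. intros j; symmetry; apply A0_decomp; auto.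
  apply in_l2_add.
  - apply (kernel_op_l2 _ _ _ schur_bounded_A0_kernel_X). apply Hu.
  - apply (kernel_op_l2 _ _ _ schur_bounded_A0_kernel_diff). apply Hu.
Qed.

Lemma A0_box_bounded (u w : seqZ) : domX u -> in_l2 w ->
  exists B, box_boundedC (fun j l => Cmul (w j) (Cconj (Cscal (akernel a j l) (u l)))) B.
Proof.
  intros [Hu1 Hu2] Hw. set (f := fun k => Cabs (u k) + 2 * Cabs (Xop u k)).
  eexists. unfold box_boundedC.
  apply (box_bounded_dom _ (fun j l => weight a 1 (j - l) * Cabs (w j) * f l)).
  - intros j l. rewrite Rabs_right by (apply Rle_ge, Cabs_nonneg).
    rewrite Cabs_mul, Cabs_conj, Cabs_scal. pose proof (akernel_bound j l). unfold f. rewrite Xop_Cabs.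
    pose proof (Cabs_nonneg (w j)). pose proof (Cabs_nonneg (u l)). pose proof (Rabs_pos (IZR l)).
    pose proof (Rabs_pos (akernel a j l)). pose proof (weight_nonneg a Ha 1 (j - l)).
    replace (weight a 1 (j - l) * Cabs (w j) * (Cabs (u l) + 2 * (Rabs (IZR l) * Cabs (u l)))) with
      (Cabs (w j) * (weight a 1 (j - l) * (1 + 2 * Rabs (IZR l)) * Cabs (u l))) by ring.
    apply Rmult_le_compat_l; auto. apply Rmult_le_compat_r; auto.
  - apply box_bounded_toeplitz_bilinear; auto using weight_summable, weight_nonneg, Cabs_nonneg.
    + intros; unfold f; pose proof (Cabs_nonneg (u k)); pose proof (Cabs_nonneg (Xop u k)); lra.
    + apply in_l2_zsummable in Hu1; apply in_l2_zsummable in Hu2.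
      eapply zsummable_nonneg_dom; [|apply (zsummable_plus _ _ (zsummable_scal _ 2 Hu1) (zsummable_scal _ 8 Hu2))].
      intros k. unfold f. rewrite !Cnorm2_Cabs. pose proof (Cabs_nonneg (u k)); pose proof (Cabs_nonneg (Xop u k)).
      pose proof (Rle_0_sqr (Cabs (u k) - 2 * Cabs (Xop u k))). unfold Rsqr in *. split; nra.
    + apply in_l2_zsummable in Hw. refine (zsummable_ext _ _ _ Hw). intros; apply Cnorm2_Cabs.
Qed.

Lemma A0_symmetric (u w : seqZ) : domX u -> domX w -> inner (A0 a u) w = inner u (A0 a w).
Proof.
  intros Hu Hw. unfold inner.
  destruct (A0_box_bounded u w Hu (proj1 Hw)) as [B BB].
  transitivity (ZsumC (fun j => ZsumC (fun l => Cmul (w j) (Cconj (Cscal (akernel a j l) (u l)))))).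
  { apply ZsumC_ext; intros j. rewrite A0_as_kernel, <- ZsumC_conj, Cmul_comm, <- ZsumC_mul; auto using A0_row_summable.
    eapply zsummableC_dom; [|apply (A0_row_summable u j Hu)]. intros; rewrite Cabs_conj; lra. }
  rewrite (FubiniC _ _ BB). apply ZsumC_ext; intros l. rewrite A0_as_kernel by auto.
  rewrite <- ZsumC_mul by (apply A0_row_summable; auto). apply ZsumC_ext; intros j.
  rewrite akernel_sym. Cring.
Qed.

End A0Kernel.

(** * The commutators with D_gamma *)

(* Symmetry of [A0] turns a pointwise commutator formula into the form identity. *)
Lemma commutator_on_core_of_pointwise (a : R) (B L : seqZ -> seqZ) : 1 < a ->
  (forall v, domX v -> domX (B v)) -> (forall phi, in_l2 phi -> in_l2 (B phi)) ->
  (forall v, domX v -> vsub (A0 a (B v)) (B (A0 a v)) = L v) -> commutator_on_core a B L.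
Proof.
  intros Ha HBX HB Hcomm u v Hu Hv.
  rewrite (A0_symmetric a Ha u (B v) Hu (HBX v Hv)), <- Hcomm, inner_sub_r; auto using A0_l2.
  apply Hu.
Qed.

(* Kernels of [[A0, D_gamma]] and of [[A0, [A0, D_gamma]]]. *)
Definition comm_kernel (a : R) (gamma : Z -> Cx) (j l : Z) : Cx :=
  Cscal (akernel a j l) (Csub (gamma l) (gamma j)).
Definition comm_kernel_X (a : R) (gamma : Z -> Cx) (j l : Z) : Cx :=
  Cscal (IZR j - IZR l) (comm_kernel a gamma j l).
Definition comm2_term (a : R) (gamma : Z -> Cx) (j k l : Z) : Cx :=
  Cscal (akernel a j l * akernel a l k) (Csub (Cadd (gamma j) (gamma k)) (Cscal 2 (gamma l))).
Definition comm2_kernel (a : R) (gamma : Z -> Cx) (j k : Z) : Cx := ZsumC (comm2_term a gamma j k).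

Lemma comm2_pair_arith (c s p q d e C2 M0 C1 : R) :
  0 <= c -> 0 <= d -> 0 <= e -> 0 <= C2 -> 0 <= M0 -> 0 <= C1 ->
  s * s * d <= C2 * ((Rabs p + Rabs q) * (Rabs p + Rabs q)) -> d <= 4 * M0 -> Rabs s * e <= C1 * Rabs (p - q) ->
  c * Rabs (2 * (s * s) - 2 * (p * q)) * d + c * Rabs (2 * s * (p - q)) * e <=
  c * (2 * C2 + 8 * M0 + 2 * C1) * (((1 + Rabs p) * (1 + Rabs p)) * ((1 + Rabs q) * (1 + Rabs q))).
Proof.
  intros Hc Hd He HC2 HM0 HC1 G2 D G1.
  set (P := Rabs p) in *. set (Q := Rabs q) in *.
  assert (HP : 0 <= P) by apply Rabs_pos. assert (HQ : 0 <= Q) by apply Rabs_pos.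
  assert (HPQ : Rabs (p - q) <= P + Q).
  { unfold P, Q, Rminus. rewrite <- (Rabs_Ropp q). apply Rabs_triang. }
  assert (A1 : Rabs (2 * (s * s) - 2 * (p * q)) * d <= 2 * C2 * ((P + Q) * (P + Q)) + 8 * M0 * (P * Q)).
  { assert (Rabs (2 * (s * s) - 2 * (p * q)) <= 2 * (s * s) + 2 * (P * Q)).
    { pose proof (Rabs_le_inv (p * q) (P * Q) ltac:(rewrite Rabs_mult; unfold P, Q; lra)).
      apply Rabs_le. nra. }
    apply Rle_trans with ((2 * (s * s) + 2 * (P * Q)) * d); [apply Rmult_le_compat_r; auto|].
    assert (P * Q * d <= P * Q * (4 * M0)) by (apply Rmult_le_compat_l; nra). nra. }
  assert (A2 : Rabs (2 * s * (p - q)) * e <= 2 * C1 * ((P + Q) * (P + Q))).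
  { rewrite !Rabs_mult, (Rabs_right 2) by lra. pose proof (Rabs_pos (p - q)). pose proof (Rabs_pos s).
    apply Rle_trans with (2 * Rabs (p - q) * (C1 * Rabs (p - q))); [nra|].
    assert (Rabs (p - q) * Rabs (p - q) <= (P + Q) * (P + Q)) by nra. nra. }
  set (W := ((1 + P) * (1 + P)) * ((1 + Q) * (1 + Q))).
  assert (X1 : (P + Q) * (P + Q) <= W) by (unfold W; assert (0 <= P * Q) by nra; nra).
  assert (X2 : P * Q <= W) by (unfold W; nra).
  replace (c * Rabs (2 * (s * s) - 2 * (p * q)) * d + c * Rabs (2 * s * (p - q)) * e)
    with (c * (Rabs (2 * (s * s) - 2 * (p * q)) * d + Rabs (2 * s * (p - q)) * e)) by ring.
  fold W. replace (c * (2 * C2 + 8 * M0 + 2 * C1) * W) with (c * ((2 * C2 + 8 * M0 + 2 * C1) * W)) by ring.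
  apply Rmult_le_compat_l; auto.
  apply Rle_trans with (2 * C2 * ((P + Q) * (P + Q)) + 8 * M0 * (P * Q) + 2 * C1 * ((P + Q) * (P + Q))); [lra|].
  assert (2 * C2 * ((P + Q) * (P + Q)) <= 2 * C2 * W) by (apply Rmult_le_compat_l; lra).
  assert (8 * M0 * (P * Q) <= 8 * M0 * W) by (apply Rmult_le_compat_l; lra).
  assert (2 * C1 * ((P + Q) * (P + Q)) <= 2 * C1 * W) by (apply Rmult_le_compat_l; lra). lra.
Qed.

Section Commutators.
Variable a : R.
Hypothesis Ha : 1 < a.
Variable gamma : Z -> Cx.
Variables M0 M1 M2 : R.
Hypothesis Hg0 : forall k, Cabs (gamma k) <= M0.
Hypothesis Hg1 : forall k, Rabs (IZR k) * Cabs (Defs.Delta gamma k) <= M1.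
Hypothesis Hg2 : forall k, IZR k * IZR k * Cabs (Defs.Delta (Defs.Delta gamma) k) <= M2.

Let c1 := 4 * (M0 + M1).
Let c2 := 16 * (M0 + M2).
Let cp := 2 * c2 + 8 * M0 + 2 * c1.

Lemma c1_nonneg : 0 <= c1.
Proof. unfold c1; pose proof (M0_nonneg gamma M0 Hg0); pose proof (M1_nonneg gamma M1 Hg1); lra. Qed.

Lemma cp_nonneg : 0 <= cp.
Proof.
  unfold cp, c1, c2. pose proof (M0_nonneg gamma M0 Hg0); pose proof (M1_nonneg gamma M1 Hg1).
  pose proof (M2_nonneg gamma M2 Hg2). lra.
Qed.

Lemma comm_kernel_bound_pow (p : nat) (j l : Z) :
  Rabs (IZR (j - l)) ^ p * Cabs (comm_kernel a gamma j l) <= c1 * weight a (S p) (j - l).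
Proof.
  unfold comm_kernel, akernel. rewrite Cabs_scal, Rabs_mult, (Rabs_right (acoef a _)) by (apply Rle_ge, acoef_nonneg; auto).
  pose proof (first_diff_bound gamma M0 M1 Hg0 Hg1 j l) as G. rewrite <- minus_IZR in G. fold c1 in G.
  pose proof (acoef_nonneg a Ha (j - l)). pose proof (acoef_mul_pow_le_weight a (S p) (j - l) Ha).
  pose proof c1_nonneg. pose proof (pow_le _ p (Rabs_pos (IZR (j - l)))).
  set (r := Rabs (IZR (j - l))) in *. simpl in *.
  apply Rle_trans with (r ^ p * acoef a (j - l) * (c1 * r)).
  - rewrite !Rmult_assoc. apply Rmult_le_compat_l; auto. apply Rmult_le_compat_l; auto.
  - replace (r ^ p * acoef a (j - l) * (c1 * r)) with (c1 * (acoef a (j - l) * (r * r ^ p))) by ring.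
    apply Rmult_le_compat_l; auto.
Qed.

Lemma comm_kernel_bound (j l : Z) : Cabs (comm_kernel a gamma j l) <= c1 * weight a 1 (j - l).
Proof. pose proof (comm_kernel_bound_pow 0 j l). simpl in *. lra. Qed.

Lemma schur_bounded_comm_kernel : schur_bounded (comm_kernel a gamma) (Zsum (fun m => c1 * weight a 1 m)).
Proof.
  apply schur_bounded_toeplitz; [|apply zsummable_scal, weight_summable; auto].
  apply comm_kernel_bound.
Qed.

Lemma schur_bounded_comm_kernel_X : schur_bounded (comm_kernel_X a gamma) (Zsum (fun m => c1 * weight a 2 m)).
Proof.
  apply schur_bounded_toeplitz; [|apply zsummable_scal, weight_summable; auto].
  intros j l. pose proof (comm_kernel_bound_pow 1 j l). unfold comm_kernel_X.
  rewrite Cabs_scal, <- minus_IZR. simpl in *. lra.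
Qed.

Lemma comm2_pair_identity (j k l : Z) :
  let c := acoef a (j - l) * acoef a (l - k) in
  let s := IZR j + IZR k in let p := IZR (l - j) in let q := IZR (k - l) in
  Cadd (comm2_term a gamma j k l) (comm2_term a gamma j k (j + k - l)%Z) =
  Cadd (Cscal (c * (2 * (s * s) - 2 * (p * q))) (second_diff gamma j (l - j) (k - l)))
       (Cscal (c * (2 * s * (p - q))) (Csub (gamma (j + k - l)%Z) (gamma l))).
Proof.
  intros c s p q. unfold comm2_term, akernel, second_diff, c, s, p, q.
  replace (j - (j + k - l))%Z with (l - k)%Z by lia. replace (j + k - l - k)%Z with (j - l)%Z by lia.
  replace (j + (l - j) + (k - l))%Z with k by lia.
  replace (j + (l - j))%Z with l by lia. replace (j + (k - l))%Z with (j + k - l)%Z by lia.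
  rewrite !minus_IZR, !plus_IZR. Cring.
Qed.

(* Pairing [l] with its reflection [j + k - l] cancels the terms that are only [O(1)] in [gamma]: what is left
   is a second difference (controlled by [q_2]) and a first difference (controlled by [q_1]). *)
Lemma comm2_pair_bound (j k l : Z) :
  Cabs (Cadd (comm2_term a gamma j k l) (comm2_term a gamma j k (j + k - l)%Z)) <=
  cp * (weight a 2 (j - l) * weight a 2 (l - k)).
Proof.
  rewrite comm2_pair_identity. cbv zeta.
  set (c := acoef a (j - l) * acoef a (l - k)). set (s := IZR j + IZR k).
  set (p := IZR (l - j)). set (q := IZR (k - l)).
  set (D := second_diff gamma j (l - j) (k - l)). set (E := Csub (gamma (j + k - l)%Z) (gamma l)).
  eapply Rle_trans. apply Cabs_add. rewrite !Cabs_scal, !Rabs_mult.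
  assert (Hc : 0 <= c) by (unfold c; apply Rmult_le_pos; apply acoef_nonneg; auto).
  rewrite (Rabs_right c) by lra.
  assert (B2 : s * s * Cabs D <= c2 * ((Rabs p + Rabs q) * (Rabs p + Rabs q))).
  { pose proof (second_diff_bound gamma M0 M2 Hg0 Hg2 j (l - j) (k - l)) as H. fold D in H.
    replace (2 * j + (l - j) + (k - l))%Z with (j + k)%Z in H by lia. rewrite plus_IZR in H. auto. }
  assert (B1 : Rabs s * Cabs E <= c1 * Rabs (p - q)).
  { pose proof (first_diff_bound gamma M0 M1 Hg0 Hg1 l (j + k - l)) as H. unfold E.
    replace (IZR l + IZR (j + k - l)) with s in H by (unfold s; rewrite minus_IZR, plus_IZR; ring).
    replace (IZR l - IZR (j + k - l)) with (p - q) in H by (unfold p, q; rewrite !minus_IZR, !plus_IZR; ring). auto. }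
  pose proof (comm2_pair_arith c s p q (Cabs D) (Cabs E) c2 M0 c1 Hc (Cabs_nonneg _) (Cabs_nonneg _)
     ltac:(unfold c2; pose proof (M0_nonneg gamma M0 Hg0); pose proof (M2_nonneg gamma M2 Hg2); lra)
     (M0_nonneg gamma M0 Hg0) c1_nonneg B2 (second_diff_le gamma M0 Hg0 _ _ _) B1) as H.
  rewrite <- !Rabs_mult in *. eapply Rle_trans; [eapply Rle_trans; [|apply H]|]; [right; ring|].
  right. unfold cp, c, weight. simpl.
  replace (Rabs p) with (Rabs (IZR (j - l))) by (unfold p; rewrite <- Rabs_Ropp, <- opp_IZR; do 2 f_equal; lia).
  replace (Rabs q) with (Rabs (IZR (l - k))) by (unfold q; rewrite <- Rabs_Ropp, <- opp_IZR; do 2 f_equal; lia).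
  ring.
Qed.

Lemma comm2_term_bound (j k l : Z) :
  Cabs (comm2_term a gamma j k l) <= 4 * M0 * ((1 + 2 * Rabs (IZR j)) * (1 + Rabs (IZR (j + k)))) * weight a 2 (j - l).
Proof.
  unfold comm2_term. rewrite Cabs_scal, Rabs_mult.
  assert (G : Cabs (Csub (Cadd (gamma j) (gamma k)) (Cscal 2 (gamma l))) <= 4 * M0).
  { eapply Rle_trans. apply Cabs_sub. rewrite Cabs_scal, Rabs_right by lra.
    pose proof (Cabs_add (gamma j) (gamma k)). pose proof (Hg0 j); pose proof (Hg0 k); pose proof (Hg0 l). lra. }
  set (m := Rabs (IZR (j - l))).
  assert (Hk : Rabs (akernel a l k) <= (1 + Rabs (IZR (j + k))) * (1 + m)).
  { unfold akernel. rewrite Rabs_mult, (Rabs_right (acoef a _)) by (apply Rle_ge, acoef_nonneg; auto).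
    replace (IZR l + IZR k) with (IZR (j + k) - IZR (j - l)) by (rewrite minus_IZR, plus_IZR; ring).
    pose proof (acoef_le_1 a Ha (l - k)). pose proof (acoef_nonneg a Ha (l - k)).
    pose proof (Rabs_triang (IZR (j + k)) (- IZR (j - l))) as T. rewrite Rabs_Ropp in T. fold m in T.
    pose proof (Rabs_pos (IZR (j + k))). pose proof (Rabs_pos (IZR (j + k) - IZR (j - l))).
    assert (0 <= m) by apply Rabs_pos. unfold Rminus. nra. }
  pose proof (akernel_bound_l a Ha j l). pose proof (weight_nonneg a Ha 1 (j - l)).
  pose proof (M0_nonneg gamma M0 Hg0). pose proof (Rabs_pos (IZR j)). pose proof (Rabs_pos (IZR (j + k))).
  pose proof (Rabs_pos (akernel a j l)). pose proof (Rabs_pos (akernel a l k)). assert (0 <= m) by apply Rabs_pos.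
  pose proof (Cabs_nonneg (Csub (Cadd (gamma j) (gamma k)) (Cscal 2 (gamma l)))).
  replace (weight a 2 (j - l)) with (weight a 1 (j - l) * (1 + m)) by (unfold weight, m; simpl; ring).
  apply Rle_trans with ((1 + 2 * Rabs (IZR j)) * weight a 1 (j - l) * ((1 + Rabs (IZR (j + k))) * (1 + m)) * (4 * M0)).
  - apply Rmult_le_compat; auto. apply Rmult_le_pos; auto. apply Rmult_le_compat; auto.
  - right; ring.
Qed.

Lemma comm2_term_summable (j k : Z) : zsummableC (comm2_term a gamma j k).
Proof.
  eapply zsummableC_dom. apply comm2_term_bound. apply zsummable_scal.
  apply (Zsum_invariant_reflect j (weight a 2)), weight_summable; auto.
Qed.

Lemma comm2_kernel_bound (j k : Z) : Cabs (comm2_kernel a gamma j k) <= cp / 2 * wconv (weight a 2) j k.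
Proof.
  unfold comm2_kernel. set (X := comm2_term a gamma j k).
  assert (AX : zsummableC X) by apply comm2_term_summable.
  assert (AX' : zsummableC (fun l => X (j + k - l)%Z)) by (apply (Zsum_invariant_reflect (j + k) (fun l => Cabs (X l))); auto).
  assert (E : ZsumC X = Cscal (/ 2) (ZsumC (fun l => Cadd (X l) (X (j + k - l)%Z)))).
  { rewrite ZsumC_add by auto. rewrite (ZsumC_reflect (j + k) X AX). apply Cx_ext; simpl; field. }
  rewrite E, Cabs_scal, Rabs_right by lra.
  pose proof (box_bounded_row _ _ k (wconv_box_row (weight a 2) (weight_summable a Ha 2) (weight_nonneg a Ha 2) j)) as R.
  simpl in R.
  apply Rle_trans with (/ 2 * Zsum (fun l => cp * (weight a 2 (j - l) * weight a 2 (l - k)))).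
  - apply Rmult_le_compat_l; [lra|]. eapply Rle_trans. apply ZsumC_abs, zsummableC_add; auto.
    apply Zsum_le; [apply zsummableC_add; auto|apply zsummable_scal; auto|]. intros l. apply comm2_pair_bound.
  - rewrite Zsum_scal by auto. unfold wconv. right; field.
Qed.

Lemma schur_bounded_comm2_kernel :
  schur_bounded (comm2_kernel a gamma) (cp / 2 * (Zsum (weight a 2) * Zsum (weight a 2))).
Proof.
  apply schur_bounded_of_wconv; auto using weight_summable, weight_nonneg, comm2_kernel_bound.
  pose proof cp_nonneg. lra.
Qed.

Definition comm_op : seqZ -> seqZ := kernel_op (comm_kernel a gamma).

Lemma comm_op_bounded : bounded_op comm_op.
Proof. exact (kernel_op_bounded _ _ schur_bounded_comm_kernel). Qed.

Lemma Dop_domX (v : seqZ) : domX v -> domX (Dop gamma v).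
Proof.
  intros [Hv HX]. split; [apply (in_l2_mul gamma v M0); auto|].
  eapply in_l2_ext; [|apply (in_l2_mul gamma (Xop v) M0); auto].
  intros k; unfold Xop, Dop; Cring.
Qed.

Lemma A0_Dop_commutator (v : seqZ) : domX v -> vsub (A0 a (Dop gamma v)) (Dop gamma (A0 a v)) = comm_op v.
Proof.
  intros Hv. apply functional_extensionality; intros j. unfold vsub, comm_op, kernel_op, Dop at 2.
  rewrite !A0_as_kernel by auto using Dop_domX.
  rewrite <- ZsumC_mul, <- ZsumC_sub by auto using A0_row_summable, Dop_domX, zsummableC_mul.
  apply ZsumC_ext; intros l. unfold comm_kernel, Dop. Cring.
Qed.

(* [X] commutes with [comm_op] up to the kernel [comm_kernel_X]. *)
Lemma comm_op_domX (v : seqZ) : domX v -> domX (comm_op v).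
Proof.
  intros [Hv HX]. pose proof schur_bounded_comm_kernel as S1. pose proof schur_bounded_comm_kernel_X as S2.
  split; [apply (kernel_op_l2 _ _ _ S1); auto|].
  eapply in_l2_ext; [|apply (in_l2_add (kernel_op (comm_kernel a gamma) (Xop v)) (kernel_op (comm_kernel_X a gamma) v));
                      [apply (kernel_op_l2 _ _ _ S1)|apply (kernel_op_l2 _ _ _ S2)]; auto].
  intros j. unfold vadd, comm_op, kernel_op. unfold Xop at 2.
  rewrite <- ZsumC_add, <- ZsumC_scal by eauto using kernel_op_row_summable.
  apply ZsumC_ext; intros l. unfold comm_kernel_X, Xop. Cring.
Qed.

Lemma A0_comm_op_box (v : seqZ) (j : Z) : domX v -> exists B, box_boundedC (fun l k => Cscal (akernel a j l) (Cmul (comm_kernel a gamma l k) (v k))) B.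
Proof.
  intros [Hv _]. eexists.
  apply (box_boundedC_wconv (weight a 1) (weight_summable a Ha 1) (weight_nonneg a Ha 1) j _
           ((1 + 2 * Rabs (IZR j)) * (c1 * l2norm v))).
  - pose proof c1_nonneg. pose proof (Rabs_pos (IZR j)). pose proof (l2norm_nonneg v).
    apply Rmult_le_pos; [|apply Rmult_le_pos]; auto; lra.
  - intros l k. rewrite Cabs_scal, Cabs_mul.
    pose proof (akernel_bound_l a Ha j l). pose proof (comm_kernel_bound l k). pose proof (Cabs_le_l2norm v k Hv).
    pose proof (weight_nonneg a Ha 1 (j - l)). pose proof (weight_nonneg a Ha 1 (l - k)).
    pose proof (Cabs_nonneg (v k)). pose proof (Cabs_nonneg (comm_kernel a gamma l k)). pose proof (Rabs_pos (IZR j)).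
    apply Rle_trans with (((1 + 2 * Rabs (IZR j)) * weight a 1 (j - l)) * ((c1 * weight a 1 (l - k)) * l2norm v)).
    + apply Rmult_le_compat; auto using Rabs_pos. apply Rmult_le_pos; auto. apply Rmult_le_compat; auto.
    + right; ring.
Qed.

Lemma comm_op_A0_box (v : seqZ) (j : Z) : domX v -> exists B, box_boundedC (fun l k => Cmul (comm_kernel a gamma j l) (Cscal (akernel a l k) (v k))) B.
Proof.
  intros Hv. eexists.
  apply (box_boundedC_wconv (weight a 1) (weight_summable a Ha 1) (weight_nonneg a Ha 1) j _
           (c1 * (l2norm v + 2 * l2norm (Xop v)))).
  - pose proof c1_nonneg. pose proof (l2norm_nonneg v). pose proof (l2norm_nonneg (Xop v)).
    apply Rmult_le_pos; auto; lra.
  - intros l k. rewrite Cabs_mul.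
    pose proof (comm_kernel_bound j l). pose proof (A0_entry_bound a Ha v l k Hv).
    pose proof (weight_nonneg a Ha 1 (j - l)). pose proof (weight_nonneg a Ha 1 (l - k)). pose proof c1_nonneg.
    apply Rle_trans with ((c1 * weight a 1 (j - l)) * (weight a 1 (l - k) * (l2norm v + 2 * l2norm (Xop v)))).
    + apply Rmult_le_compat; auto using Cabs_nonneg.
    + right; ring.
Qed.

Lemma A0_comm_op_commutator (v : seqZ) : domX v ->
  vsub (A0 a (comm_op v)) (comm_op (A0 a v)) = kernel_op (comm2_kernel a gamma) v.
Proof.
  intros Hv. pose proof schur_bounded_comm_kernel as S1.
  apply functional_extensionality; intros j. unfold vsub.
  destruct (A0_comm_op_box v j Hv) as [B1 Box1]. destruct (comm_op_A0_box v j Hv) as [B2 Box2].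
  destruct (box_boundedC_row_sums _ _ Box1) as [_ C1']. destruct (box_boundedC_row_sums _ _ Box2) as [_ C2'].
  rewrite A0_as_kernel by auto using comm_op_domX.
  rewrite (ZsumC_ext _ (fun l => ZsumC (fun k => Cscal (akernel a j l) (Cmul (comm_kernel a gamma l k) (v k))))).
  2:{ intros l. unfold comm_op, kernel_op. rewrite <- ZsumC_scal; auto. apply (kernel_op_row_summable _ _ _ _ S1), Hv. }
  unfold comm_op, kernel_op.
  rewrite (ZsumC_ext (fun l => Cmul (comm_kernel a gamma j l) (A0 a v l))
                     (fun l => ZsumC (fun k => Cmul (comm_kernel a gamma j l) (Cscal (akernel a l k) (v k))))).
  2:{ intros l. rewrite A0_as_kernel, <- ZsumC_mul by auto using A0_row_summable. auto. }
  rewrite (FubiniC _ _ Box1), (FubiniC _ _ Box2), <- ZsumC_sub by auto.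
  apply ZsumC_ext; intros k.
  rewrite <- ZsumC_sub by (apply (box_boundedC_col _ _ k Box1) || apply (box_boundedC_col _ _ k Box2)).
  unfold comm2_kernel. rewrite Cmul_comm, <- ZsumC_mul by apply comm2_term_summable.
  apply ZsumC_ext; intros l. unfold comm_kernel, comm2_term. Cring.
Qed.

Theorem Dop_C2 : Defs.C2 a (Dop gamma).
Proof.
  pose proof (Dop_bounded gamma M0 Hg0) as HD. pose proof comm_op_bounded as HL.
  pose proof (kernel_op_bounded _ _ schur_bounded_comm2_kernel) as HN.
  assert (CD : commutator_on_core a (Dop gamma) comm_op).
  { apply commutator_on_core_of_pointwise; auto using Dop_domX, A0_Dop_commutator. apply HD. }
  assert (CL : commutator_on_core a comm_op (kernel_op (comm2_kernel a gamma))).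
  { apply commutator_on_core_of_pointwise; auto using comm_op_domX, A0_comm_op_commutator. apply HL. }
  split.
  - apply (C1_of_core a _ comm_op); auto using A0_l2.
  - exists comm_op. split.
    + apply is_adA_of_core; auto using A0_l2.
    + apply (C1_of_core a _ (kernel_op (comm2_kernel a gamma))); auto using A0_l2.
Qed.

End Commutators.

Lemma q_finite_2_bounds (gamma : Z -> Cx) : q_finite 2 gamma ->
  (exists M1, forall k, Rabs (IZR k) * Cabs (Defs.Delta gamma k) <= M1) /\
  (exists M2, forall k, IZR k * IZR k * Cabs (Defs.Delta (Defs.Delta gamma) k) <= M2).
Proof.
  intros hq. destruct (hq 1%nat ltac:(lia)) as [M1 H1]. destruct (hq 2%nat ltac:(lia)) as [M2 H2].
  split; [exists M1|exists M2]; intros k.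
  - specialize (H1 k). rewrite Cabs_scal in H1. simpl in H1. rewrite Rmult_1_r in H1. exact H1.
  - specialize (H2 k). rewrite Cabs_scal, Rabs_right in H2 by (apply Rle_ge; simpl; nra).
    simpl in H2. rewrite Rmult_1_r in H2. exact H2.
Qed.

Theorem mainTheorem9 (a : R) (gamma : Z -> Cx)
  (ha : 1 < a)
  (hbdd : exists M, forall k, Cabs (gamma k) <= M)
  (hq : q_finite 2 gamma) :
  C2 a (Dop gamma).
Proof.
  destruct hbdd as [M0 H0].
  destruct (q_finite_2_bounds gamma hq) as [[M1 H1] [M2 H2]].
  exact (Dop_C2 a ha gamma M0 M1 M2 H0 H1 H2).
Qed.
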